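(* Let $n\ge1$, let $\Delta\subset\mathbb{R}^n$ be an $n$-simplex with vertices $\mathbf{x}_0,\dots,\mathbf{x}_n$, and let $f\colon\Delta\to\mathbb{R}$ be convex. Let $K,L\subset N=\{0,\dots,n\}$ be disjoint nonempty sets with $\operatorname{card}K=k+1$ and $\operatorname{card}L=l+1$. Then $$\operatorname{Avg}(f,\Delta_{K\cup L})\le \frac{k+1}{k+l+2}\operatorname{Avg}(f,\Delta_K)+\frac{l+1}{k+l+2}\operatorname{Avg}(f,\Delta_L).$$
   Context: $\mathbf{x}_0,\dots,\mathbf{x}_n\in\mathbb{R}^n$ are affinely independent and $\Delta=\operatorname{conv}\{\mathbf{x}_0,\dots,\mathbf{x}_n\}$. For nonempty $K\subset N$ with $\operatorname{card}K=k+1$, $\Delta_K=\operatorname{conv}\{\mathbf{x}_i: i\in K\}$ is a $k$-simplex. For a $k$-simplex $\Sigma$ and integrable $g\colon\Sigma\to\mathbb{R}$, $\operatorname{Avg}(g,\Sigma)=\frac{1}{\operatorname{Vol}_k(\Sigma)}\int_\Sigma g\,d\mathbf{x}$ with respect to $k$-dimensional Lebesgue measure on the affine hull of $\Sigma$; for a $0$-simplex $\{\mathbf{y}\}$, $\operatorname{Avg}(g,\{\mathbf{y}\})=g(\mathbf{y})$. *)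

From Stdlib Require Import Reals Lra List ClassicalEpsilon Arith Factorial.
Import ListNotations.
Open Scope R_scope.

(* Points of R^n are represented as functions nat -> R; we require that
   the vertices vanish at coordinates >= n (so everything lives in R^n). *)
Definition vec := nat -> R.
Definition vadd (u v : vec) : vec := fun j => u j + v j.
Definition vsub (u v : vec) : vec := fun j => u j - v j.
Definition vscale (a : R) (u : vec) : vec := fun j => a * u j.

(* Total version of the 1-dimensional Riemann integral over [a,b]
   (value 0 if f is not Riemann integrable; never used for integrable data). *)
Definition RInt (f : R -> R) (a b : R) : R :=
  match excluded_middle_informative
          (exists v : R, exists pr : Riemann_integrable f a b, RiemannInt pr = v) with
  | left H => proj1_sig (constructive_indefinite_description _ H)
  | right _ => 0
  end.

(* simplex_int k h s = integral of h over
   { (t_1,...,t_k) : t_i >= 0, t_1 + ... + t_k <= s }  (Lebesgue measure on R^k),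
   computed as an iterated Riemann integral. *)
Fixpoint simplex_int (k : nat) (h : list R -> R) (s : R) : R :=
  match k with
  | O => h []
  | S k' => RInt (fun t => simplex_int k' (fun ts => h (t :: ts)) (s - t)) 0 s
  end.

(* y0 + sum_i t_i (y_i - y0) : affine parametrisation of conv{y0, y1, ..., yk} *)
Fixpoint face_point (y0 : vec) (ys : list vec) (ts : list R) : vec :=
  match ys, ts with
  | y :: ys', t :: ts' => vadd (vscale t (vsub y y0)) (face_point y0 ys' ts')
  | _, _ => y0
  end.

(* Avg(g, conv{y0,...,yk}) for affinely independent y0,...,yk:
   by the affine change of variables t |-> y0 + sum t_i (y_i - y0) (constant
   Jacobian), this equals (1/Vol(T_k)) * integral over the standard simplex
   T_k, with Vol(T_k) = 1/k!. *)
Definition Avg (g : vec -> R) (ys : list vec) : R :=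
  match ys with
  | [] => 0
  | y0 :: rest =>
      INR (fact (length rest)) *
      simplex_int (length rest) (fun ts => g (face_point y0 rest ts)) 1
  end.

Definition affinely_independent (n : nat) (x : nat -> vec) : Prop :=
  forall c : nat -> R,
    sum_f_R0 c n = 0 ->
    (forall j, sum_f_R0 (fun i => c i * x i j) n = 0) ->
    forall i, (i <= n)%nat -> c i = 0.

Definition in_simplex (n : nat) (x : nat -> vec) (p : vec) : Prop :=
  exists lam : nat -> R,
    (forall i, (i <= n)%nat -> 0 <= lam i) /\
    sum_f_R0 lam n = 1 /\
    forall j, p j = sum_f_R0 (fun i => lam i * x i j) n.

Definition convex_on (S : vec -> Prop) (f : vec -> R) : Prop :=
  forall p q (a : R), S p -> S q -> 0 <= a <= 1 ->
    f (vadd (vscale a p) (vscale (1 - a) q)) <= a * f p + (1 - a) * f q.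

(* Parametrize Delta_{K u L} by the standard simplex and let sigma be the total barycentric
   weight of the vertices in L.  A point of Delta_{K u L} is then (1 - sigma) p + sigma q with
   p in Delta_K and q in Delta_L, so by convexity f is bounded by the sum of the perspective
   functions (1 - sigma) f(p) and sigma f(q).  By dilation, and the invariance of Lebesgue measure
   on the simplex under permutations of the barycentric coordinates, their averages are
   (k+1)/(k+l+2) Avg(f, Delta_K) and (l+1)/(k+l+2) Avg(f, Delta_L): they are Beta integrals.
   Since Avg is an iterated Riemann integral, that invariance rests on exchanging the order of
   integration over a triangle, for integrands that are continuous inside (being convex) but
   possibly not on the boundary; this is reduced to the rectangle by a continuous cut-off. *)

From Pilot Require Import Defs.
From Stdlib Require Import Reals Lra Lia List Permutation Factorial.
From Stdlib Require Import ClassicalEpsilon FunctionalExtensionality.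
From Coquelicot Require Import Coquelicot.
Import ListNotations.
Open Scope R_scope.
Set Bullet Behavior "Strict Subproofs".

(** * Calculus of the total Riemann integral *)

Lemma Defs_RInt_correct (f : R -> R) a b : ex_RInt f a b -> Defs.RInt f a b = RInt f a b.
Proof.
  intros H. unfold Defs.RInt.
  destruct (excluded_middle_informative _) as [e|n].
  - destruct (constructive_indefinite_description _ e) as [v [pr Hv]]; simpl.
    rewrite <- Hv. symmetry. apply RInt_Reals.
  - exfalso. apply n. exists (RInt f a b), (ex_RInt_Reals_0 _ _ _ H).
    symmetry; apply RInt_Reals.
Qed.

Lemma Defs_RInt_not_ex (f : R -> R) a b : ~ ex_RInt f a b -> Defs.RInt f a b = 0.
Proof.
  intros H. unfold Defs.RInt.
  destruct (excluded_middle_informative _) as [e|n]; auto.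
  exfalso. destruct e as [v [pr _]]. apply H, (ex_RInt_Reals_1 _ _ _ pr).
Qed.

Lemma Defs_RInt_ext (f g : R -> R) a b :
  (forall x, Rmin a b < x < Rmax a b -> f x = g x) -> Defs.RInt f a b = Defs.RInt g a b.
Proof.
  intros H. destruct (classic (ex_RInt f a b)) as [Hf|Hf].
  - assert (Hg : ex_RInt g a b) by (eapply ex_RInt_ext; eauto).
    rewrite !Defs_RInt_correct by auto. apply RInt_ext; auto.
  - assert (Hg : ~ ex_RInt g a b).
    { intro Hg; apply Hf. eapply ex_RInt_ext; [|exact Hg]. intros; symmetry; auto. }
    rewrite !Defs_RInt_not_ex by auto. reflexivity.
Qed.

Lemma Defs_RInt_ext_all (f g : R -> R) a b :
  (forall x, f x = g x) -> Defs.RInt f a b = Defs.RInt g a b.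
Proof. intros H. apply Defs_RInt_ext. intros x _. apply H. Qed.

Lemma ex_RInt_scal_iff (f : R -> R) a b c :
  c <> 0 -> ex_RInt (fun x => c * f x) a b <-> ex_RInt f a b.
Proof.
  intros Hc; split; intro H.
  - apply (ex_RInt_ext (fun x => / c * (c * f x))).
    + intros x _. cbn. field. auto.
    + apply (ex_RInt_scal _ _ _ (/ c) H).
  - apply (ex_RInt_scal _ _ _ c H).
Qed.

Lemma Defs_RInt_const (c : R) a b : Defs.RInt (fun _ => c) a b = c * (b - a).
Proof.
  rewrite Defs_RInt_correct by apply ex_RInt_const.
  rewrite RInt_const. apply Rmult_comm.
Qed.

Lemma Defs_RInt_scal (f : R -> R) a b c :
  Defs.RInt (fun x => c * f x) a b = c * Defs.RInt f a b.
Proof.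
  destruct (Req_dec c 0) as [->|Hc].
  - rewrite (Defs_RInt_ext_all _ (fun _ => 0)) by (intros; ring).
    rewrite Defs_RInt_const. ring.
  - destruct (classic (ex_RInt f a b)) as [Hf|Hf].
    + rewrite !Defs_RInt_correct by (try apply ex_RInt_scal_iff; auto).
      apply (RInt_scal f a b c Hf).
    + rewrite !Defs_RInt_not_ex; [ring|auto|]. rewrite ex_RInt_scal_iff; auto.
Qed.

Lemma Defs_RInt_plus (f g : R -> R) a b : ex_RInt f a b -> ex_RInt g a b ->
  Defs.RInt (fun x => f x + g x) a b = Defs.RInt f a b + Defs.RInt g a b.
Proof.
  intros Hf Hg. rewrite !Defs_RInt_correct by (try apply (ex_RInt_plus f g); auto).
  apply (RInt_plus f g a b Hf Hg).
Qed.

Lemma Defs_RInt_minus (f g : R -> R) a b : ex_RInt f a b -> ex_RInt g a b ->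
  Defs.RInt (fun x => f x - g x) a b = Defs.RInt f a b - Defs.RInt g a b.
Proof.
  intros Hf Hg. rewrite !Defs_RInt_correct by (try apply (ex_RInt_minus f g); auto).
  apply (RInt_minus f g a b Hf Hg).
Qed.

Lemma Defs_RInt_le (f g : R -> R) a b : a <= b -> ex_RInt f a b -> ex_RInt g a b ->
  (forall x, a < x < b -> f x <= g x) -> Defs.RInt f a b <= Defs.RInt g a b.
Proof. intros. rewrite !Defs_RInt_correct by auto. apply RInt_le; auto. Qed.

Lemma Defs_RInt_le_const (f : R -> R) a b M : a <= b -> ex_RInt f a b ->
  (forall x, a < x < b -> f x <= M) -> Defs.RInt f a b <= M * (b - a).
Proof. intros. rewrite <- Defs_RInt_const. apply Defs_RInt_le; auto. apply ex_RInt_const. Qed.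

Lemma Defs_RInt_abs_le (f g : R -> R) a b : a <= b -> ex_RInt f a b -> ex_RInt g a b ->
  (forall x, a < x < b -> Rabs (f x) <= g x) -> Rabs (Defs.RInt f a b) <= Defs.RInt g a b.
Proof.
  intros Hab Hf Hg H. apply Rabs_le. split.
  - replace (- Defs.RInt g a b) with (Defs.RInt (fun x => -1 * g x) a b)
      by (rewrite Defs_RInt_scal; ring).
    apply Defs_RInt_le; auto. apply (ex_RInt_scal _ _ _ (-1) Hg).
    intros x Hx. specialize (H x Hx). apply Rabs_le_between in H. lra.
  - apply Defs_RInt_le; auto. intros x Hx. specialize (H x Hx). apply Rabs_le_between in H. lra.
Qed.

Lemma Defs_RInt_point (f : R -> R) a : Defs.RInt f a a = 0.
Proof. rewrite Defs_RInt_correct by apply ex_RInt_point. exact (RInt_point a f). Qed.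

Lemma Defs_RInt_swap (f : R -> R) a b : Defs.RInt f b a = - Defs.RInt f a b.
Proof.
  destruct (classic (ex_RInt f a b)) as [E|E].
  - rewrite !Defs_RInt_correct by (first [exact E | apply ex_RInt_swap, E]).
    apply (eq_sym (opp_RInt_swap f a b E)).
  - rewrite !Defs_RInt_not_ex; [ring|auto|]. intro E'; apply E, ex_RInt_swap, E'.
Qed.

Lemma Defs_RInt_Chasles (f : R -> R) a b c : ex_RInt f a b -> ex_RInt f b c ->
  Defs.RInt f a b + Defs.RInt f b c = Defs.RInt f a c.
Proof.
  intros H1 H2. rewrite !Defs_RInt_correct by (try apply (ex_RInt_Chasles f a b c); auto).
  apply (RInt_Chasles f a b c H1 H2).
Qed.

Lemma ex_RInt_comp_lin_iff (f : R -> R) u v a b : u <> 0 ->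
  ex_RInt (fun y => f (u * y + v)) a b <-> ex_RInt f (u * a + v) (u * b + v).
Proof.
  intros Hu; split; intro H.
  - assert (H1 := ex_RInt_comp_lin (fun y => f (u * y + v)) (/ u) (- v / u)
                                      (u * a + v) (u * b + v)).
    replace (/ u * (u * a + v) + - v / u) with a in H1 by (field; auto).
    replace (/ u * (u * b + v) + - v / u) with b in H1 by (field; auto).
    apply (ex_RInt_ext (fun y => u * (/ u * f (u * (/ u * y + - v / u) + v)))).
    + intros x _. cbn. replace (u * (/ u * x + - v / u) + v) with x by (field; auto). field; auto.
    + apply (ex_RInt_scal _ _ _ u (H1 H)).
  - apply (ex_RInt_ext (fun y => / u * (u * f (u * y + v)))).
    + intros x _. cbn. field; auto.
    + apply (ex_RInt_scal _ _ _ (/ u) (ex_RInt_comp_lin f u v a b H)).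
Qed.

Lemma Defs_RInt_comp_lin (f : R -> R) u v a b : u <> 0 ->
  Defs.RInt f (u * a + v) (u * b + v) = u * Defs.RInt (fun y => f (u * y + v)) a b.
Proof.
  intros Hu. destruct (classic (ex_RInt f (u * a + v) (u * b + v))) as [H|H].
  - assert (H' : ex_RInt (fun y => f (u * y + v)) a b) by (apply ex_RInt_comp_lin_iff; auto).
    rewrite !Defs_RInt_correct by auto.
    rewrite <- (RInt_comp_lin f u v a b H). exact (RInt_scal _ _ _ u H').
  - assert (H' : ~ ex_RInt (fun y => f (u * y + v)) a b) by (rewrite ex_RInt_comp_lin_iff; auto).
    rewrite !Defs_RInt_not_ex by auto. ring.
Qed.

Lemma Defs_RInt_dilate (f : R -> R) c r : c <> 0 ->
  Defs.RInt f 0 (c * r) = c * Defs.RInt (fun y => f (c * y)) 0 r.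
Proof.
  intros Hc. assert (E := Defs_RInt_comp_lin f c 0 0 r Hc).
  rewrite Rmult_0_r, !Rplus_0_r in E. rewrite E.
  f_equal. apply Defs_RInt_ext_all; intros; rewrite Rplus_0_r; reflexivity.
Qed.

Lemma Defs_RInt_reflect (f : R -> R) r :
  Defs.RInt f 0 r = Defs.RInt (fun y => f (r - y)) 0 r.
Proof.
  assert (E := Defs_RInt_comp_lin f (-1) r r 0 ltac:(lra)).
  replace (-1 * r + r) with 0 in E by ring. replace (-1 * 0 + r) with r in E by ring.
  rewrite E, Defs_RInt_swap, (Defs_RInt_ext_all _ (fun y => f (r - y))) by (intros; f_equal; ring).
  ring.
Qed.

Lemma Defs_RInt_shift (f : R -> R) a b v :
  Defs.RInt f (a + v) (b + v) = Defs.RInt (fun y => f (y + v)) a b.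
Proof.
  assert (E := Defs_RInt_comp_lin f 1 v a b ltac:(lra)). rewrite !Rmult_1_l in E.
  rewrite E. apply Defs_RInt_ext_all; intros; f_equal; ring.
Qed.

Lemma ex_RInt_continuity_pt (f : R -> R) a b :
  (forall x, continuity_pt f x) -> ex_RInt f a b.
Proof.
  intros H. exact (ex_RInt_continuous f a b (fun z _ => proj1 (continuity_pt_filterlim f z) (H z))).
Qed.

(** * Integrability of bounded functions continuous inside an interval *)

Lemma StepFun_Riemann_integrable a b (phi : StepFun a b) : Riemann_integrable phi a b.
Proof.
  intro eps. exists phi, (mkStepFun (StepFun_P4 a b 0)). split.
  - intros t _. simpl. unfold fct_cte. rewrite Rminus_diag, Rabs_R0. lra.
  - rewrite StepFun_P18, Rmult_0_l, Rabs_R0. apply cond_pos.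
Qed.

Lemma ex_RInt_StepFun a b (phi : StepFun a b) :
  ex_RInt phi a b /\ RInt phi a b = RiemannInt_SF phi.
Proof.
  split; [apply ex_RInt_Reals_1, StepFun_Riemann_integrable|].
  rewrite (RInt_Reals _ _ _ (StepFun_Riemann_integrable a b phi)).
  unfold RiemannInt.
  destruct (RiemannInt_exists (StepFun_Riemann_integrable a b phi) RinvN RinvN_cv) as [l Hl].
  apply (UL_sequence (fun _ => RiemannInt_SF phi)).
  2: { intros e He. exists 0%nat. intros. unfold R_dist. rewrite Rminus_diag, Rabs_R0. auto. }
  apply RiemannInt_P11 with (f := phi) (un := RinvN)
    (phi1 := fun n => phi_sequence RinvN (StepFun_Riemann_integrable a b phi) n)
    (psi1 := fun n => proj1_sig (phi_sequence_prop RinvN (StepFun_Riemann_integrable a b phi) n))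
    (psi2 := fun _ => mkStepFun (StepFun_P4 a b 0)); auto.
  - apply RinvN_cv.
  - intro n. apply (proj2_sig (phi_sequence_prop RinvN _ n)).
  - intro n. split.
    + intros t _. simpl. unfold fct_cte. rewrite Rminus_diag, Rabs_R0. lra.
    + rewrite StepFun_P18, Rmult_0_l, Rabs_R0. apply cond_pos.
Qed.

Lemma ex_RInt_approx (f : R -> R) a b : a <= b ->
  (forall eps, 0 < eps -> exists g h : R -> R, ex_RInt g a b /\ ex_RInt h a b /\
     (forall x, a <= x <= b -> Rabs (f x - g x) <= h x) /\ Defs.RInt h a b < eps) ->
  ex_RInt f a b.
Proof.
  intros Hab H. apply ex_RInt_Reals_1. intro eps.
  assert (He4 : 0 < eps / 4) by (destruct eps; simpl; lra).
  assert (He8 : 0 < eps / 8) by (destruct eps; simpl; lra).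
  destruct (constructive_indefinite_description _ (H (eps/4) He4)) as [g E].
  destruct (constructive_indefinite_description _ E) as [h [Hg [Hh [Hgh Hint]]]].
  destruct (ex_RInt_Reals_0 _ _ _ Hg (mkposreal _ He4)) as [phig [psig [Hg1 Hg2]]].
  destruct (ex_RInt_Reals_0 _ _ _ Hh (mkposreal _ He8)) as [phih [psih [Hh1 Hh2]]].
  simpl in Hg2, Hh2.
  rewrite Rmin_left in Hg1, Hh1 by auto. rewrite Rmax_right in Hg1, Hh1 by auto.
  set (psi := mkStepFun (StepFun_P28 1 (mkStepFun (StepFun_P28 1 phih psih)) psig)).
  assert (Hpsi : forall t, a <= t <= b -> Rabs (f t - phig t) <= psi t).
  { intros t Ht. specialize (Hg1 t Ht). specialize (Hh1 t Ht). specialize (Hgh t Ht).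
    simpl. apply Rabs_le_between in Hh1.
    replace (f t - phig t) with ((f t - g t) + (g t - phig t)) by ring.
    pose proof (Rabs_triang (f t - g t) (g t - phig t)). lra. }
  exists phig, psi. split.
  - intros t Ht. rewrite Rmin_left, Rmax_right in Ht by auto. apply Hpsi; auto.
  - destruct (ex_RInt_StepFun a b phih) as [E1 V1].
    destruct (ex_RInt_StepFun a b psih) as [E2 V2].
    destruct (ex_RInt_StepFun a b psi) as [E4 V4].
    assert (Vpsi : RiemannInt_SF psi =
      RiemannInt_SF phih + 1 * RiemannInt_SF psih + 1 * RiemannInt_SF psig)
      by (unfold psi; rewrite !StepFun_P30; reflexivity).
    rewrite <- Defs_RInt_correct in V1, V2, V4 by auto.
    assert (L1 : RiemannInt_SF phih <= Defs.RInt h a b + RiemannInt_SF psih).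
    { rewrite <- V1, <- V2, <- Defs_RInt_plus by auto.
      apply Defs_RInt_le; auto. apply (ex_RInt_plus (V := R_NormedModule)); auto.
      intros x Hx. specialize (Hh1 x ltac:(lra)). apply Rabs_le_between in Hh1. lra. }
    assert (L0 : 0 <= RiemannInt_SF psi).
    { rewrite <- V4, <- (Rmult_0_l (b - a)), <- (Defs_RInt_const 0 a b).
      apply Defs_RInt_le; auto. apply ex_RInt_const.
      intros x Hx. pose proof (Hpsi x ltac:(lra)). pose proof (Rabs_pos (f x - phig x)). lra. }
    rewrite Rabs_pos_eq by lra. rewrite Vpsi in L0 |- *.
    apply Rabs_def2 in Hg2. apply Rabs_def2 in Hh2. lra.
Qed.

Definition clamp01 (y : R) : R := (Rabs y - Rabs (y - 1) + 1) / 2.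

Definition ramp (d x : R) : R := clamp01 ((x - d) / d).

Lemma ramp_range d x : 0 <= ramp d x <= 1.
Proof. unfold ramp, clamp01, Rabs; repeat destruct Rcase_abs; lra. Qed.

Lemma ramp_0 d x : 0 < d -> x <= d -> ramp d x = 0.
Proof.
  intros Hd Hx. assert ((x - d) / d <= 0).
  { apply Rmult_le_reg_r with d; auto. unfold Rdiv. rewrite Rmult_assoc, Rinv_l; lra. }
  unfold ramp, clamp01, Rabs; repeat destruct Rcase_abs; lra.
Qed.

Lemma ramp_1 d x : 0 < d -> 2 * d <= x -> ramp d x = 1.
Proof.
  intros Hd Hx. assert (1 <= (x - d) / d).
  { apply Rmult_le_reg_r with d; auto. unfold Rdiv. rewrite Rmult_assoc, Rinv_l; lra. }
  unfold ramp, clamp01, Rabs; repeat destruct Rcase_abs; lra.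
Qed.

Lemma ramp_lipschitz d x y : 0 < d -> Rabs (ramp d x - ramp d y) <= Rabs (x - y) / d.
Proof.
  intros Hd. replace (Rabs (x - y) / d) with (Rabs ((x - d) / d - (y - d) / d)).
  - unfold ramp, clamp01. generalize ((x - d) / d) ((y - d) / d). intros u v.
    unfold Rabs; repeat destruct Rcase_abs; lra.
  - replace ((x - d) / d - (y - d) / d) with ((x - y) * / d) by (field; lra).
    rewrite Rabs_mult, Rabs_inv, (Rabs_pos_eq d) by lra. reflexivity.
Qed.

Lemma lipschitz_continuity_pt (f : R -> R) L d x : 0 < d ->
  (forall y, Rabs (y - x) <= d -> Rabs (f y - f x) <= L * Rabs (y - x)) -> continuity_pt f x.
Proof.
  intros Hd H eps Heps.
  assert (HL : 0 < Rabs L + 1) by (pose proof (Rabs_pos L); lra).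
  exists (Rmin d (eps / (Rabs L + 1))). split.
  { apply Rmin_pos; auto. apply Rdiv_lt_0_compat; auto. }
  intros y [_ Hy]. simpl in *. unfold R_dist in *.
  pose proof (Rmin_l d (eps / (Rabs L + 1))). pose proof (Rmin_r d (eps / (Rabs L + 1))).
  eapply Rle_lt_trans; [apply H; lra|].
  apply Rle_lt_trans with ((Rabs L + 1) * Rabs (y - x)).
  - apply Rmult_le_compat_r; [apply Rabs_pos|]. pose proof (RRle_abs L). lra.
  - apply Rmult_lt_reg_r with (/ (Rabs L + 1)); [apply Rinv_0_lt_compat; lra|].
    rewrite Rmult_comm, <- Rmult_assoc, Rinv_l by lra. unfold Rdiv in *. lra.
Qed.

Lemma ramp_continuity_pt d x : 0 < d -> continuity_pt (ramp d) x.
Proof.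
  intros Hd. apply (lipschitz_continuity_pt _ (/ d) 1); [lra|]. intros y _.
  rewrite Rmult_comm. apply ramp_lipschitz; auto.
Qed.

Lemma continuity_pt_locally_0 (g : R -> R) z d : 0 < d ->
  (forall y, Rabs (y - z) < d -> g y = 0) -> continuity_pt g z.
Proof.
  intros Hd H eps Heps. exists d. split; auto.
  intros y [_ Hy]. simpl in *. unfold R_dist in *.
  rewrite (H y Hy), (H z) by (rewrite Rminus_diag, Rabs_R0; auto).
  rewrite Rminus_diag, Rabs_R0. auto.
Qed.

Lemma continuity_pt_ramp_comp d (g : R -> R) x : 0 < d ->
  continuity_pt g x -> continuity_pt (fun y => 1 - ramp d (g y)) x.
Proof.
  intros Hd Hg. apply continuity_pt_minus; [apply continuity_pt_const; intros ? ?; auto|].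
  apply (continuity_pt_comp g (ramp d)); auto. apply ramp_continuity_pt; auto.
Qed.

Lemma ex_RInt_ramp_defect d (g : R -> R) a b : 0 < d ->
  (forall x, continuity_pt g x) -> ex_RInt (fun y => 1 - ramp d (g y)) a b.
Proof. intros Hd Hg. apply ex_RInt_continuity_pt. intros. apply continuity_pt_ramp_comp; auto. Qed.

Lemma ramp_defect_integral d L : 0 < d -> 0 <= L -> Defs.RInt (fun u => 1 - ramp d u) 0 L <= 2 * d.
Proof.
  intros Hd HL.
  assert (Hex : forall p q, ex_RInt (fun u => 1 - ramp d u) p q).
  { intros. apply (ex_RInt_ramp_defect d (fun u => u)); auto. intros; apply continuity_pt_id. }
  assert (Hle : forall p q, p <= q -> Defs.RInt (fun u => 1 - ramp d u) p q <= 1 * (q - p)).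
  { intros p q Hpq. apply Defs_RInt_le_const; auto. intros x _. pose proof (ramp_range d x). lra. }
  destruct (Rle_dec L (2 * d)).
  - pose proof (Hle 0 L HL). lra.
  - rewrite <- (Defs_RInt_Chasles _ 0 (2 * d) L) by auto.
    rewrite (Defs_RInt_ext _ (fun _ => 0) (2 * d) L), Defs_RInt_const.
    + pose proof (Hle 0 (2 * d) ltac:(lra)). lra.
    + intros x Hx. rewrite Rmin_left, Rmax_right in Hx by lra. rewrite ramp_1; lra.
Qed.

Lemma ramp_defect_affine_integral d s : 0 < d -> 0 <= s ->
  Defs.RInt (fun t => (1 - ramp d t) * s + 4 * d) 0 s <= 6 * s * d.
Proof.
  intros Hd Hs.
  assert (E : ex_RInt (fun t => 1 - ramp d t) 0 s)
    by (apply (ex_RInt_ramp_defect d (fun t => t)); auto; intros; reg).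
  rewrite (Defs_RInt_plus (fun t => (1 - ramp d t) * s)), Defs_RInt_const,
    (Defs_RInt_ext_all _ (fun t => s * (1 - ramp d t))), Defs_RInt_scal;
    [|intros; ring| |apply ex_RInt_const].
  - pose proof (ramp_defect_integral d s Hd Hs). nra.
  - apply (ex_RInt_ext (fun t => s * (1 - ramp d t))); [intros; cbn; ring|].
    apply (ex_RInt_scal (V := R_NormedModule)), E.
Qed.

Lemma ramp_defect_integral_left d t s : 0 < d -> t <= s ->
  Defs.RInt (fun x => 1 - ramp d (x - t)) t s <= 2 * d.
Proof.
  intros Hd Hts. assert (E := Defs_RInt_shift (fun x => 1 - ramp d (x - t)) 0 (s - t) t).
  rewrite Rplus_0_l, Rplus_comm, Rplus_minus in E. rewrite E.
  rewrite (Defs_RInt_ext_all _ (fun u => 1 - ramp d u)) by (intros; do 2 f_equal; ring).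
  apply ramp_defect_integral; lra.
Qed.

Lemma ramp_defect_integral_right d t s : 0 < d -> t <= s ->
  Defs.RInt (fun x => 1 - ramp d (s - x)) t s <= 2 * d.
Proof.
  intros Hd Hts. assert (E := Defs_RInt_shift (fun x => 1 - ramp d (s - x)) 0 (s - t) t).
  rewrite Rplus_0_l, Rplus_comm, Rplus_minus in E. rewrite E, Defs_RInt_reflect.
  rewrite (Defs_RInt_ext_all _ (fun u => 1 - ramp d u)) by (intros; do 2 f_equal; ring).
  apply ramp_defect_integral; lra.
Qed.

Definition interval_cutoff (a b d x : R) : R := ramp d (x - a) * ramp d (b - x).

Lemma interval_cutoff_range a b d x : 0 <= interval_cutoff a b d x <= 1.
Proof.
  unfold interval_cutoff. pose proof (ramp_range d (x - a)). pose proof (ramp_range d (b - x)).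
  split; nra.
Qed.

Lemma interval_cutoff_0 a b d x : 0 < d -> x <= a + d \/ b - d <= x -> interval_cutoff a b d x = 0.
Proof.
  intros Hd [Hx|Hx]; unfold interval_cutoff;
    [rewrite (ramp_0 d (x - a))|rewrite (ramp_0 d (b - x))]; lra.
Qed.

Lemma interval_cutoff_continuity a b d x : 0 < d -> continuity_pt (interval_cutoff a b d) x.
Proof.
  intros Hd. apply continuity_pt_mult; apply (continuity_pt_comp _ (ramp d));
    try apply ramp_continuity_pt; auto; reg.
Qed.

Lemma ex_RInt_interval_cutoff_defect a b d p q : 0 < d ->
  ex_RInt (fun x => 1 - interval_cutoff a b d x) p q.
Proof.
  intros Hd. apply ex_RInt_continuity_pt. intros.
  apply continuity_pt_minus; [reg|apply interval_cutoff_continuity; auto].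
Qed.

Lemma interval_cutoff_defect_integral a b d : 0 < d -> a <= b ->
  Defs.RInt (fun x => 1 - interval_cutoff a b d x) a b <= 4 * d.
Proof.
  intros Hd Hab. eapply Rle_trans.
  - apply (Defs_RInt_le _ (fun x => (1 - ramp d (x - a)) + (1 - ramp d (b - x)))); auto.
    + apply ex_RInt_interval_cutoff_defect; auto.
    + apply (ex_RInt_plus (V := R_NormedModule)); apply ex_RInt_ramp_defect; auto; intros; reg.
    + intros x _. unfold interval_cutoff.
      pose proof (ramp_range d (x - a)). pose proof (ramp_range d (b - x)). nra.
  - rewrite Defs_RInt_plus by (apply ex_RInt_ramp_defect; auto; intros; reg).
    pose proof (ramp_defect_integral_left d a b Hd Hab).
    pose proof (ramp_defect_integral_right d a b Hd Hab). lra.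
Qed.

Lemma interval_cutoff_mul_continuity (f : R -> R) a b d z : 0 < d ->
  (forall x, a < x < b -> continuity_pt f x) ->
  continuity_pt (fun x => interval_cutoff a b d x * f x) z.
Proof.
  intros Hd Hc. destruct (Rlt_dec a z), (Rlt_dec z b).
  - apply continuity_pt_mult; [apply interval_cutoff_continuity; auto|apply Hc; lra].
  - apply (continuity_pt_locally_0 _ _ d); auto. intros y Hy. apply Rabs_def2 in Hy.
    rewrite interval_cutoff_0; [ring|auto|lra].
  - apply (continuity_pt_locally_0 _ _ d); auto. intros y Hy. apply Rabs_def2 in Hy.
    rewrite interval_cutoff_0; [ring|auto|lra].
  - apply (continuity_pt_locally_0 _ _ d); auto. intros y Hy. apply Rabs_def2 in Hy.
    rewrite interval_cutoff_0; [ring|auto|lra].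
Qed.

Lemma ex_RInt_bounded_continuous (f : R -> R) a b M : a <= b ->
  (forall x, a <= x <= b -> Rabs (f x) <= M) ->
  (forall x, a < x < b -> continuity_pt f x) -> ex_RInt f a b.
Proof.
  intros Hab HM Hc. apply ex_RInt_approx; auto. intros eps Heps.
  set (M1 := Rabs M + 1).
  assert (HM1 : 0 < M1) by (unfold M1; pose proof (Rabs_pos M); lra).
  set (d := eps / (8 * M1)).
  assert (Hd : 0 < d) by (unfold d; apply Rdiv_lt_0_compat; lra).
  assert (Hd1 : M1 * (4 * d) < eps) by (unfold d; field_simplify; lra).
  assert (Hex : ex_RInt (fun x => 1 - interval_cutoff a b d x) a b)
    by (apply ex_RInt_interval_cutoff_defect; auto).
  exists (fun x => interval_cutoff a b d x * f x), (fun x => M1 * (1 - interval_cutoff a b d x)).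
  split; [|split; [|split]].
  - apply ex_RInt_continuity_pt. intros; apply interval_cutoff_mul_continuity; auto.
  - apply (ex_RInt_scal _ _ _ M1 Hex).
  - intros x Hx. specialize (HM x Hx). pose proof (interval_cutoff_range a b d x).
    replace (f x - interval_cutoff a b d x * f x) with ((1 - interval_cutoff a b d x) * f x)
      by ring.
    rewrite Rabs_mult, (Rabs_pos_eq (1 - interval_cutoff a b d x)) by lra.
    pose proof (RRle_abs M). pose proof (Rabs_pos (f x)). unfold M1. nra.
  - rewrite Defs_RInt_scal. pose proof (interval_cutoff_defect_integral a b d Hd Hab).
    apply Rmult_le_compat_l with (r := M1) in H; lra.
Qed.

(** * Convex functions of one and two variables *)

Definition convex_on_interval (f : R -> R) a b := forall x y l,
  a <= x <= b -> a <= y <= b -> 0 <= l <= 1 ->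
  f (l * x + (1 - l) * y) <= l * f x + (1 - l) * f y.

Lemma convex_on_interval_bounded f a b : a <= b -> convex_on_interval f a b ->
  exists M, forall x, a <= x <= b -> Rabs (f x) <= M.
Proof.
  intros Hab Hc. set (U := Rmax (f a) (f b)).
  assert (Hup : forall x, a <= x <= b -> f x <= U).
  { intros x Hx. pose proof (Rmax_l (f a) (f b)). pose proof (Rmax_r (f a) (f b)).
    destruct (Req_dec a b) as [E|E].
    - subst. replace x with b by lra. auto.
    - set (l := (b - x) / (b - a)).
      assert (0 <= l <= 1).
      { unfold l. split; [apply Rdiv_le_0_compat; lra|].
        apply Rmult_le_reg_r with (b - a); [lra|].
        unfold Rdiv; rewrite Rmult_assoc, Rinv_l; lra. }
      replace x with (l * a + (1 - l) * b) by (unfold l; field; lra).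
      eapply Rle_trans; [apply Hc; auto; lra|]. fold U in H, H0. nra. }
  set (m := (a + b) / 2).
  exists (Rmax (Rabs U) (Rabs (2 * f m - U))).
  intros x Hx. pose proof (Rmax_l (Rabs U) (Rabs (2 * f m - U))).
  pose proof (Rmax_r (Rabs U) (Rabs (2 * f m - U))).
  apply Rabs_le. split.
  - assert (f m <= / 2 * f x + (1 - / 2) * f (a + b - x)).
    { replace m with (/ 2 * x + (1 - / 2) * (a + b - x)) by (unfold m; field). apply Hc; lra. }
    pose proof (Hup (a + b - x) ltac:(lra)).
    pose proof (Rle_abs (- (2 * f m - U))). rewrite Rabs_Ropp in H3. lra.
  - pose proof (Hup x Hx). pose proof (RRle_abs U). lra.
Qed.

(* [r] lies on the chord from [0] to [d], and [0] on the chord from [-d] to [r]. *)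
Lemma convex_center_lipschitz (phi : R -> R) d M r : 0 < d ->
  convex_on_interval phi (- d) d -> (forall y, - d <= y <= d -> Rabs (phi y) <= M) ->
  0 <= r <= d -> Rabs (phi r - phi 0) <= 2 * M * r / d.
Proof.
  intros Hd Hc HM Hr.
  destruct (Req_dec r 0) as [->|Hr0].
  { rewrite Rminus_diag, Rabs_R0. unfold Rdiv. rewrite Rmult_0_r, Rmult_0_l. lra. }
  assert (A1 : phi r <= r / d * phi d + (1 - r / d) * phi 0).
  { replace r with (r / d * d + (1 - r / d) * 0) at 1 by (field; lra).
    apply Hc; try lra. split; [apply Rdiv_le_0_compat; lra|].
    apply Rmult_le_reg_r with d; auto. unfold Rdiv; rewrite Rmult_assoc, Rinv_l; lra. }
  assert (A2 : phi 0 <= d / (d + r) * phi r + (1 - d / (d + r)) * phi (- d)).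
  { replace 0 with (d / (d + r) * r + (1 - d / (d + r)) * (- d)) at 1 by (field; lra).
    apply Hc; try lra. split; [apply Rdiv_le_0_compat; lra|].
    apply Rmult_le_reg_r with (d + r); [lra|]. unfold Rdiv; rewrite Rmult_assoc, Rinv_l; lra. }
  pose proof (HM d ltac:(lra)) as B1. pose proof (HM (- d) ltac:(lra)) as B2.
  pose proof (HM 0 ltac:(lra)) as B3. pose proof (HM r ltac:(lra)) as B4.
  apply Rabs_le_between in B1, B2, B3, B4.
  assert (C1 : d * (phi r - phi 0) <= r * (phi d - phi 0)).
  { replace (r * (phi d - phi 0)) with (d * (r / d * phi d + (1 - r / d) * phi 0) - d * phi 0)
      by (field; lra). apply Rmult_le_compat_l with (r := d) in A1; lra. }
  assert (C2 : d * (phi 0 - phi r) <= r * (phi (- d) - phi 0)).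
  { apply Rmult_le_compat_l with (r := d + r) in A2; [|lra].
    replace ((d + r) * (d / (d + r) * phi r + (1 - d / (d + r)) * phi (- d)))
      with (d * phi r + r * phi (- d)) in A2 by (field; lra). lra. }
  assert (E : 2 * M * r / d = / d * (r * (2 * M))) by (field; lra).
  assert (Hid : 0 < / d) by (apply Rinv_0_lt_compat; lra).
  assert (r * (phi (- d) - phi 0) <= r * (2 * M)) by (apply Rmult_le_compat_l; lra).
  assert (r * (phi d - phi 0) <= r * (2 * M)) by (apply Rmult_le_compat_l; lra).
  rewrite E. apply Rabs_le. split.
  - apply Rmult_le_reg_l with d; auto. rewrite Ropp_mult_distr_r_reverse, <- Rmult_assoc,
      Rinv_r, Rmult_1_l by lra. lra.
  - apply Rmult_le_reg_l with d; auto. rewrite <- Rmult_assoc, Rinv_r, Rmult_1_l by lra. lra.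
Qed.

Lemma convex_on_interval_comp_affine f a b c e p q : convex_on_interval f a b ->
  (forall z, p <= z <= q -> a <= c + e * z <= b) ->
  convex_on_interval (fun z => f (c + e * z)) p q.
Proof.
  intros Hc H z1 z2 l Hz1 Hz2 Hl.
  replace (c + e * (l * z1 + (1 - l) * z2))
    with (l * (c + e * z1) + (1 - l) * (c + e * z2)) by ring.
  apply Hc; auto.
Qed.

Lemma convex_on_interval_lipschitz f a b M x0 d : convex_on_interval f a b ->
  (forall x, a <= x <= b -> Rabs (f x) <= M) -> 0 < d -> a <= x0 - d -> x0 + d <= b ->
  forall x, Rabs (x - x0) <= d -> Rabs (f x - f x0) <= 2 * M / d * Rabs (x - x0).
Proof.
  intros Hc HM Hd Ha Hb x Hx. apply Rabs_le_between in Hx.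
  assert (Hline : forall e, e = 1 \/ e = -1 -> forall r, 0 <= r <= d ->
    Rabs (f (x0 + e * r) - f x0) <= 2 * M / d * r).
  { intros e He r Hr.
    assert (Hb' : forall z, - d <= z <= d -> a <= x0 + e * z <= b)
      by (intros z Hz; destruct He; subst; lra).
    replace (f x0) with (f (x0 + e * 0)) by (f_equal; ring).
    replace (2 * M / d * r) with (2 * M * r / d) by (field; lra).
    apply (convex_center_lipschitz (fun z => f (x0 + e * z))); auto.
    apply (convex_on_interval_comp_affine f a b); auto. }
  destruct (Rle_dec x0 x).
  - rewrite (Rabs_pos_eq (x - x0)) by lra. replace x with (x0 + 1 * (x - x0)) at 1 by ring.
    apply Hline; auto; lra.
  - rewrite (Rabs_left (x - x0)) by lra. replace x with (x0 + -1 * (- (x - x0))) at 1 by ring.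
    apply Hline; auto; lra.
Qed.

Lemma convex_on_interval_continuity_pt f a b x0 : convex_on_interval f a b -> a < x0 < b ->
  continuity_pt f x0.
Proof.
  intros Hc Hx0. destruct (convex_on_interval_bounded f a b ltac:(lra) Hc) as [M HM].
  set (d := Rmin (x0 - a) (b - x0)).
  assert (Hd : 0 < d) by (apply Rmin_pos; lra).
  pose proof (Rmin_l (x0 - a) (b - x0)). pose proof (Rmin_r (x0 - a) (b - x0)).
  apply (lipschitz_continuity_pt f (2 * M / d) d); auto.
  fold d in H, H0. apply (convex_on_interval_lipschitz f a b); auto; lra.
Qed.

Lemma ex_RInt_mul_convex f p a b P : a <= b -> convex_on_interval f a b ->
  (forall x, a <= x <= b -> Rabs (p x) <= P) -> (forall x, continuity_pt p x) ->
  ex_RInt (fun x => p x * f x) a b.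
Proof.
  intros Hab Hc HP Hp. destruct (convex_on_interval_bounded f a b Hab Hc) as [M HM].
  apply (ex_RInt_bounded_continuous _ a b (P * M)); auto.
  - intros x Hx. rewrite Rabs_mult. apply Rmult_le_compat; auto; apply Rabs_pos.
  - intros. apply continuity_pt_mult; auto. apply (convex_on_interval_continuity_pt f a b); auto.
Qed.

Lemma ex_RInt_convex f a b : a <= b -> convex_on_interval f a b -> ex_RInt f a b.
Proof.
  intros Hab Hc. apply (ex_RInt_ext (fun x => 1 * f x)); [intros; cbn; ring|].
  apply (ex_RInt_mul_convex f (fun _ => 1) a b 1); auto.
  - intros. rewrite Rabs_R1. lra.
  - intros. apply continuity_pt_const. intros ? ?; auto.
Qed.

Definition in_triangle (s t u : R) : Prop := 0 <= t /\ 0 <= u /\ t + u <= s.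

Definition convex_on_triangle (N : R -> R -> R) (s : R) : Prop :=
  forall t1 u1 t2 u2 l, in_triangle s t1 u1 -> in_triangle s t2 u2 -> 0 <= l <= 1 ->
    N (l * t1 + (1 - l) * t2) (l * u1 + (1 - l) * u2) <= l * N t1 u1 + (1 - l) * N t2 u2.

(* Bounded above by the values at the vertices, below through the centroid [(s/3, s/3)]. *)
Lemma convex_on_triangle_bounded N s : 0 <= s -> convex_on_triangle N s ->
  exists M, forall t u, in_triangle s t u -> Rabs (N t u) <= M.
Proof.
  intros Hs Hc. set (U := Rmax (N 0 0) (Rmax (N s 0) (N 0 s))).
  assert (U0 : N 0 0 <= U) by apply Rmax_l.
  assert (U1 : N s 0 <= U) by (eapply Rle_trans; [apply Rmax_l|apply Rmax_r]).
  assert (U2 : N 0 s <= U) by (eapply Rle_trans; [apply Rmax_r|apply Rmax_r]).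
  assert (Hup : forall t u, in_triangle s t u -> N t u <= U).
  { intros t u [Ht [Hu Htu]].
    destruct (Req_dec (t + u) 0) as [E|E].
    { replace t with 0 by lra. replace u with 0 by lra. auto. }
    set (a := t / (t + u)). set (b := (t + u) / s).
    assert (Ha : 0 <= a <= 1).
    { unfold a; split; [apply Rdiv_le_0_compat; lra|].
      apply Rmult_le_reg_r with (t + u); [lra|]. unfold Rdiv; rewrite Rmult_assoc, Rinv_l; lra. }
    assert (Hb : 0 <= b <= 1).
    { unfold b; split; [apply Rdiv_le_0_compat; lra|].
      apply Rmult_le_reg_r with s; [lra|]. unfold Rdiv; rewrite Rmult_assoc, Rinv_l; lra. }
    assert (He : N (a * s + (1 - a) * 0) (a * 0 + (1 - a) * s) <= U).
    { eapply Rle_trans; [apply Hc; unfold in_triangle; lra|]. nra. }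
    replace t with (b * (a * s + (1 - a) * 0) + (1 - b) * 0) by (unfold a, b; field; lra).
    replace u with (b * (a * 0 + (1 - a) * s) + (1 - b) * 0) by (unfold a, b; field; lra).
    eapply Rle_trans; [apply Hc; unfold in_triangle; try lra; nra|]. nra. }
  set (m := s / 3).
  exists (Rmax (Rabs U) (Rabs (3 * N m m - 2 * U))).
  intros t u Htu. pose proof (Rmax_l (Rabs U) (Rabs (3 * N m m - 2 * U))).
  pose proof (Rmax_r (Rabs U) (Rabs (3 * N m m - 2 * U))).
  apply Rabs_le. destruct Htu as [Ht [Hu Htu]]. split.
  - assert (N m m <= / 3 * N t u + (1 - / 3) * N ((s - t) / 2) ((s - u) / 2)).
    { replace m with (/ 3 * t + (1 - / 3) * ((s - t) / 2)) at 1 by (unfold m; field).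
      replace m with (/ 3 * u + (1 - / 3) * ((s - u) / 2)) at 1 by (unfold m; field).
      apply Hc; unfold in_triangle; lra. }
    pose proof (Hup ((s - t) / 2) ((s - u) / 2) ltac:(unfold in_triangle; lra)).
    pose proof (Rle_abs (- (3 * N m m - 2 * U))). rewrite Rabs_Ropp in H3. lra.
  - pose proof (Hup t u ltac:(unfold in_triangle; lra)). pose proof (RRle_abs U). lra.
Qed.

Lemma convex_on_triangle_line N s t0 u0 e1 e2 p q : convex_on_triangle N s ->
  (forall z, p <= z <= q -> in_triangle s (t0 + e1 * z) (u0 + e2 * z)) ->
  convex_on_interval (fun z => N (t0 + e1 * z) (u0 + e2 * z)) p q.
Proof.
  intros Hc H z1 z2 l Hz1 Hz2 Hl.
  replace (t0 + e1 * (l * z1 + (1 - l) * z2))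
    with (l * (t0 + e1 * z1) + (1 - l) * (t0 + e1 * z2)) by ring.
  replace (u0 + e2 * (l * z1 + (1 - l) * z2))
    with (l * (u0 + e2 * z1) + (1 - l) * (u0 + e2 * z2)) by ring.
  apply Hc; auto.
Qed.

Lemma convex_on_triangle_lipschitz N s M t0 u0 d : convex_on_triangle N s ->
  (forall t u, in_triangle s t u -> Rabs (N t u) <= M) ->
  0 < d -> d <= t0 -> d <= u0 -> t0 + u0 + 2 * d <= s ->
  forall t u, Rabs (t - t0) <= d -> Rabs (u - u0) <= d ->
  Rabs (N t u - N t0 u0) <= 2 * M / d * (Rabs (t - t0) + Rabs (u - u0)).
Proof.
  intros Hc HM Hd H1 H2 H3 t u Ht Hu.
  set (r := Rmax (Rabs (t - t0)) (Rabs (u - u0))).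
  assert (Hrt : Rabs (t - t0) <= r) by apply Rmax_l.
  assert (Hru : Rabs (u - u0) <= r) by apply Rmax_r.
  assert (Hrd : r <= d) by (apply Rmax_lub; auto).
  pose proof (Rabs_pos (t - t0)). pose proof (Rabs_pos (u - u0)).
  assert (M0 : 0 <= M) by (pose proof (HM t0 u0 ltac:(unfold in_triangle; lra));
                           pose proof (Rabs_pos (N t0 u0)); lra).
  destruct (Req_dec r 0) as [E|E].
  { replace t with t0 by (apply Rabs_le_between in Hrt; lra).
    replace u with u0 by (apply Rabs_le_between in Hru; lra).
    rewrite !Rminus_diag, !Rabs_R0. apply Rmult_le_pos; [apply Rdiv_le_0_compat|]; lra. }
  set (e1 := (t - t0) / r). set (e2 := (u - u0) / r).
  assert (He : forall e z, Rabs (e * r) <= r -> Rabs z <= d -> - d <= e * z <= d).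
  { intros e z Her Hz. apply Rabs_le_between. rewrite Rabs_mult.
    rewrite Rabs_mult, (Rabs_pos_eq r) in Her by lra.
    assert (Rabs e <= 1) by (apply Rmult_le_reg_r with r; lra).
    pose proof (Rabs_pos e). pose proof (Rabs_pos z). nra. }
  assert (E1 : e1 * r = t - t0) by (unfold e1; field; lra).
  assert (E2 : e2 * r = u - u0) by (unfold e2; field; lra).
  assert (Hline : forall z, - d <= z <= d -> in_triangle s (t0 + e1 * z) (u0 + e2 * z)).
  { intros z Hz. apply Rabs_le_between in Hz.
    pose proof (He e1 z ltac:(rewrite E1; auto) Hz).
    pose proof (He e2 z ltac:(rewrite E2; auto) Hz).
    unfold in_triangle; lra. }
  assert (Hphi := convex_center_lipschitz (fun z => N (t0 + e1 * z) (u0 + e2 * z)) d M r Hd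
    (convex_on_triangle_line N s t0 u0 e1 e2 (- d) d Hc Hline)
    (fun z Hz => HM _ _ (Hline z Hz)) ltac:(lra)).
  cbv beta in Hphi. rewrite E1, E2, !Rmult_0_r, !Rplus_0_r in Hphi.
  replace (t0 + (t - t0)) with t in Hphi by ring. replace (u0 + (u - u0)) with u in Hphi by ring.
  eapply Rle_trans; [exact Hphi|].
  replace (2 * M * r / d) with (2 * M / d * r) by (field; lra).
  apply Rmult_le_compat_l; [apply Rdiv_le_0_compat; lra|unfold r; apply Rmax_lub; lra].
Qed.

Lemma lipschitz_continuity_2d_pt (g : R -> R -> R) L d x y : 0 < d ->
  (forall u v, Rabs (u - x) <= d -> Rabs (v - y) <= d ->
     Rabs (g u v - g x y) <= L * (Rabs (u - x) + Rabs (v - y))) ->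
  continuity_2d_pt g x y.
Proof.
  intros Hd H eps.
  assert (HL : 0 < 2 * (Rabs L + 1)) by (pose proof (Rabs_pos L); lra).
  assert (Hdelta : 0 < Rmin d (eps / (2 * (Rabs L + 1))))
    by (apply Rmin_pos; auto; apply Rdiv_lt_0_compat; [apply cond_pos|auto]).
  exists (mkposreal _ Hdelta). intros u v Hu Hv. simpl in Hu, Hv.
  pose proof (Rmin_l d (eps / (2 * (Rabs L + 1)))).
  pose proof (Rmin_r d (eps / (2 * (Rabs L + 1)))).
  pose proof (Rabs_pos (u - x)). pose proof (Rabs_pos (v - y)).
  eapply Rle_lt_trans; [apply H; lra|].
  apply Rle_lt_trans with ((Rabs L + 1) * (Rabs (u - x) + Rabs (v - y))).
  - apply Rmult_le_compat_r; [lra|]. pose proof (RRle_abs L). lra.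
  - assert (HS : Rabs (u - x) + Rabs (v - y) < eps / (Rabs L + 1)).
    { replace (eps / (Rabs L + 1)) with (2 * (eps / (2 * (Rabs L + 1)))) by (field; lra). lra. }
    apply Rmult_lt_compat_l with (r := Rabs L + 1) in HS; [|lra].
    replace ((Rabs L + 1) * (eps / (Rabs L + 1))) with (pos eps) in HS by (field; lra). exact HS.
Qed.

Lemma convex_on_triangle_continuity_shear N s M t0 x0 : convex_on_triangle N s ->
  (forall t u, in_triangle s t u -> Rabs (N t u) <= M) ->
  0 < t0 -> t0 < x0 -> x0 < s -> continuity_2d_pt (fun t x => N t (x - t)) t0 x0.
Proof.
  intros Hc HM H1 H2 H3.
  set (d := Rmin t0 (Rmin (x0 - t0) (s - x0)) / 3).
  assert (Hd : 0 < d) by (unfold d; apply Rdiv_lt_0_compat; [repeat apply Rmin_pos|]; lra).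
  pose proof (Rmin_l t0 (Rmin (x0 - t0) (s - x0))).
  pose proof (Rmin_r t0 (Rmin (x0 - t0) (s - x0))).
  pose proof (Rmin_l (x0 - t0) (s - x0)). pose proof (Rmin_r (x0 - t0) (s - x0)).
  assert (Ed : 3 * d = Rmin t0 (Rmin (x0 - t0) (s - x0))) by (unfold d; field).
  assert (M0 : 0 <= M) by (pose proof (HM t0 (x0 - t0) ltac:(unfold in_triangle; lra));
                           pose proof (Rabs_pos (N t0 (x0 - t0))); lra).
  apply (lipschitz_continuity_2d_pt _ (2 * (2 * M / d)) (d / 2)); [lra|]. intros t x Ht Hx.
  assert (Htx : Rabs (x - t - (x0 - t0)) <= Rabs (t - t0) + Rabs (x - x0)).
  { replace (x - t - (x0 - t0)) with ((x - x0) + - (t - t0)) by ring.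
    rewrite Rplus_comm, <- (Rabs_Ropp (t - t0)). apply Rabs_triang. }
  pose proof (Rabs_pos (t - t0)). pose proof (Rabs_pos (x - x0)).
  eapply Rle_trans; [apply (convex_on_triangle_lipschitz N s M t0 (x0 - t0) d); auto; lra|].
  assert (0 <= 2 * M / d) by (apply Rdiv_le_0_compat; lra). nra.
Qed.

(** * Exchanging the order of integration *)

Lemma continuity_2d_pt_slice_r (g : R -> R -> R) x y :
  continuity_2d_pt g x y -> continuity_pt (g x) y.
Proof.
  intros H eps Heps. destruct (H (mkposreal eps Heps)) as [d Hd].
  exists d. split; [apply cond_pos|]. intros v [_ Hv].
  apply Hd; [rewrite Rminus_diag, Rabs_R0; apply cond_pos|exact Hv].
Qed.

Lemma continuity_2d_pt_swap (g : R -> R -> R) x y :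
  continuity_2d_pt g x y -> continuity_2d_pt (fun u v => g v u) y x.
Proof. intros H eps. destruct (H eps) as [d Hd]. exists d. intros u v Hu Hv. apply Hd; auto. Qed.

Lemma continuity_2d_pt_slice_l (g : R -> R -> R) x y :
  continuity_2d_pt g x y -> continuity_pt (fun u => g u y) x.
Proof. intros H. apply (continuity_2d_pt_slice_r (fun u v => g v u)), continuity_2d_pt_swap, H. Qed.

Lemma ex_RInt_continuity_2d_slice (g : R -> R -> R) x a b :
  (forall x y, continuity_2d_pt g x y) -> ex_RInt (g x) a b.
Proof. intros Hg. apply ex_RInt_continuity_pt. intros; apply continuity_2d_pt_slice_r, Hg. Qed.

Lemma continuity_pt_RInt_param_le (g : R -> R -> R) a b x0 : a <= b ->
  (forall x y, continuity_2d_pt g x y) -> continuity_pt (fun x => Defs.RInt (g x) a b) x0.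
Proof.
  intros Hab Hg eps Heps.
  set (e := eps / (b - a + 1)).
  assert (He : 0 < e) by (unfold e; apply Rdiv_lt_0_compat; lra).
  destruct (uniform_continuity_2d g (x0 - 1) (x0 + 1) a b ltac:(intros; auto) (mkposreal e He))
    as [d Hd].
  exists (Rmin d 1). split; [apply Rmin_pos; [apply cond_pos|lra]|].
  intros x [_ Hx]. simpl in *. unfold R_dist in *.
  pose proof (Rmin_l d 1). pose proof (Rmin_r d 1). apply Rabs_def2 in Hx.
  assert (Hex : forall z, ex_RInt (g z) a b) by (intros; apply ex_RInt_continuity_2d_slice; auto).
  rewrite <- Defs_RInt_minus by auto.
  eapply Rle_lt_trans.
  - apply (Defs_RInt_abs_le _ (fun _ => e)); auto.
    + apply (ex_RInt_minus (V := R_NormedModule)); auto.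
    + apply ex_RInt_const.
    + intros y Hy. left. apply Hd; try lra.
      * apply Rabs_def1; lra.
      * rewrite Rminus_diag, Rabs_R0. apply cond_pos.
  - rewrite Defs_RInt_const. unfold e.
    replace (eps / (b - a + 1) * (b - a)) with (eps * ((b - a) / (b - a + 1))) by (field; lra).
    assert ((b - a) / (b - a + 1) < 1).
    { apply Rmult_lt_reg_r with (b - a + 1); [lra|].
      unfold Rdiv; rewrite Rmult_assoc, Rinv_l; lra. }
    assert (0 <= (b - a) / (b - a + 1)) by (apply Rdiv_le_0_compat; lra). nra.
Qed.

Lemma continuity_pt_RInt_param (g : R -> R -> R) a b x0 :
  (forall x y, continuity_2d_pt g x y) -> continuity_pt (fun x => Defs.RInt (g x) a b) x0.
Proof.
  intros Hg. destruct (Rle_dec a b); [apply continuity_pt_RInt_param_le; auto|].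
  apply (continuity_pt_ext (fun x => - Defs.RInt (g x) b a)).
  - intros x. rewrite <- Defs_RInt_swap. reflexivity.
  - apply continuity_pt_opp, continuity_pt_RInt_param_le; auto; lra.
Qed.

Lemma is_derive_Defs_RInt (f : R -> R) a z :
  (forall x, continuity_pt f x) -> is_derive (fun u => Defs.RInt f a u) z (f z).
Proof.
  intros Hf. apply (is_derive_ext (fun u => RInt f a u)).
  - intros t. symmetry. apply Defs_RInt_correct, ex_RInt_continuity_pt, Hf.
  - apply (is_derive_RInt f (fun u => RInt f a u) a z).
    + exists (mkposreal 1 Rlt_0_1). intros b0 _. apply (RInt_correct f), ex_RInt_continuity_pt, Hf.
    + apply continuity_pt_filterlim, Hf.
Qed.

(* Both sides vanish at [b = a] and have the same derivative in [b]. *)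
Lemma Defs_RInt_Fubini_rect (g : R -> R -> R) a b c d : a <= b ->
  (forall x y, continuity_2d_pt g x y) ->
  Defs.RInt (fun x => Defs.RInt (g x) c d) a b =
  Defs.RInt (fun y => Defs.RInt (fun x => g x y) a b) c d.
Proof.
  intros Hab Hg.
  assert (Hg' : forall x y, continuity_2d_pt (fun u v => g v u) x y)
    by (intros; apply continuity_2d_pt_swap, Hg).
  set (phi := fun x => Defs.RInt (g x) c d).
  assert (Hphi : forall x, continuity_pt phi x) by (intros; apply continuity_pt_RInt_param, Hg).
  set (F := fun z y => Defs.RInt (fun x => g x y) a z).
  assert (HF : forall z y, is_derive (fun u => F u y) z (g z y)).
  { intros z y. apply (is_derive_Defs_RInt (fun x => g x y)).
    intros; apply continuity_2d_pt_slice_l, Hg. }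
  assert (DPsi : forall z, is_derive (fun z => Defs.RInt (F z) c d) z (phi z)).
  { intros z. apply (is_derive_ext (fun u => RInt (F u) c d)).
    { intros t; symmetry; apply Defs_RInt_correct, ex_RInt_continuity_pt.
      intros; apply (continuity_pt_RInt_param (fun u v => g v u)); auto. }
    replace (phi z) with (RInt (fun t => Derive (fun u => F u t) z) c d).
    2: { unfold phi. rewrite Defs_RInt_correct by (apply ex_RInt_continuity_2d_slice; auto).
         apply RInt_ext. intros x _. apply is_derive_unique; auto. }
    apply (is_derive_RInt_param F c d z).
    - exists (mkposreal 1 Rlt_0_1). intros x0 _ t _. eexists; apply HF.
    - intros t _. apply (continuity_2d_pt_ext g); auto.
      intros x0 y0. symmetry. apply is_derive_unique, HF.
    - exists (mkposreal 1 Rlt_0_1). intros y _. apply ex_RInt_continuity_pt.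
      intros; apply (continuity_pt_RInt_param (fun u v => g v u)); auto. }
  assert (E := eq_is_derive (fun z => Defs.RInt phi a z - Defs.RInt (F z) c d) a b).
  assert (Ea : Defs.RInt phi a a - Defs.RInt (F a) c d = 0).
  { unfold F. rewrite Defs_RInt_point, (Defs_RInt_ext_all _ (fun _ => 0))
      by (intros; apply Defs_RInt_point).
    rewrite Defs_RInt_const. ring. }
  assert (Eb : Defs.RInt phi a a - Defs.RInt (F a) c d =
               Defs.RInt phi a b - Defs.RInt (F b) c d).
  { destruct (Req_dec a b) as [<-|Hne]; [reflexivity|].
    apply E; [|lra]. intros t _.
    assert (D := is_derive_minus _ _ t _ _ (is_derive_Defs_RInt phi a t Hphi) (DPsi t)).
    rewrite minus_eq_zero in D. exact D. }
  unfold phi, F in *. lra.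
Qed.

Lemma eq_of_abs_le_all_pos x y C : (forall d, 0 < d -> Rabs (x - y) <= C * d) -> x = y.
Proof.
  intros H. destruct (Req_dec x y) as [|Hne]; auto. exfalso.
  assert (He : 0 < Rabs (x - y)) by (apply Rabs_pos_lt; lra).
  assert (HC : 0 < Rabs C + 1) by (pose proof (Rabs_pos C); lra).
  specialize (H (Rabs (x - y) / (2 * (Rabs C + 1))) ltac:(apply Rdiv_lt_0_compat; lra)).
  assert (C * (Rabs (x - y) / (2 * (Rabs C + 1))) <= Rabs (x - y) * (Rabs C / (2 * (Rabs C + 1)))).
  { replace (Rabs (x - y) * (Rabs C / (2 * (Rabs C + 1))))
      with (Rabs C * (Rabs (x - y) / (2 * (Rabs C + 1)))) by (field; lra).
    apply Rmult_le_compat_r; [apply Rdiv_le_0_compat; lra|apply RRle_abs]. }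
  assert (Rabs C / (2 * (Rabs C + 1)) < 1).
  { apply Rmult_lt_reg_r with (2 * (Rabs C + 1)); [lra|].
    unfold Rdiv; rewrite Rmult_assoc, Rinv_l; pose proof (Rabs_pos C); lra. }
  nra.
Qed.

Lemma Defs_RInt_diff_abs_le (f g h : R -> R) a b : a <= b ->
  ex_RInt f a b -> ex_RInt g a b -> ex_RInt h a b ->
  (forall x, a < x < b -> Rabs (f x - g x) <= h x) ->
  Rabs (Defs.RInt f a b - Defs.RInt g a b) <= Defs.RInt h a b.
Proof.
  intros Hab Hf Hg Hh H. rewrite <- Defs_RInt_minus by auto.
  apply Defs_RInt_abs_le; auto. apply (ex_RInt_minus (V := R_NormedModule)); auto.
Qed.

Definition triangle_cutoff (s d t x : R) : R := ramp d t * ramp d (x - t) * ramp d (s - x).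

Definition triangle_defect (s d t x : R) : R :=
  (1 - ramp d t) + (1 - ramp d (x - t)) + (1 - ramp d (s - x)).

Lemma triangle_cutoff_range s d t x : 0 <= triangle_cutoff s d t x <= 1.
Proof.
  unfold triangle_cutoff. pose proof (ramp_range d t). pose proof (ramp_range d (x - t)).
  pose proof (ramp_range d (s - x)). assert (0 <= ramp d t * ramp d (x - t) <= 1) by (split; nra).
  split; nra.
Qed.

Lemma triangle_cutoff_pos s d t x : 0 < d -> 0 < triangle_cutoff s d t x ->
  d < t /\ d < x - t /\ d < s - x.
Proof.
  intros Hd. unfold triangle_cutoff.
  destruct (Rle_dec t d); [rewrite (ramp_0 d t) by lra; lra|].
  destruct (Rle_dec (x - t) d); [rewrite (ramp_0 d (x - t)) by lra; lra|].
  destruct (Rle_dec (s - x) d); [rewrite (ramp_0 d (s - x)) by lra; lra|].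
  intros; lra.
Qed.

Lemma triangle_cutoff_defect s d t x : 1 - triangle_cutoff s d t x <= triangle_defect s d t x.
Proof.
  unfold triangle_cutoff, triangle_defect. pose proof (ramp_range d t).
  pose proof (ramp_range d (x - t)). pose proof (ramp_range d (s - x)).
  assert (0 <= ramp d t * ramp d (x - t) <= 1) by (split; nra). nra.
Qed.

Lemma ramp_triple_lipschitz s d t x u v : 0 < d ->
  Rabs (ramp d u - ramp d t) + Rabs (ramp d (v - u) - ramp d (x - t)) +
  Rabs (ramp d (s - v) - ramp d (s - x)) <= 2 / d * (Rabs (u - t) + Rabs (v - x)).
Proof.
  intros Hd. pose proof (ramp_lipschitz d u t Hd). pose proof (ramp_lipschitz d (v - u) (x - t) Hd).
  pose proof (ramp_lipschitz d (s - v) (s - x) Hd).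
  replace (v - u - (x - t)) with ((v - x) + - (u - t)) in H0 by ring.
  replace (s - v - (s - x)) with (- (v - x)) in H1 by ring. rewrite Rabs_Ropp in H1.
  pose proof (Rabs_triang (v - x) (- (u - t))). rewrite Rabs_Ropp in H2.
  assert (Hid : 0 <= / d) by (left; apply Rinv_0_lt_compat; lra).
  apply Rmult_le_compat_r with (r := / d) in H2; auto.
  unfold Rdiv in *. rewrite Rmult_plus_distr_r in H2.
  replace (2 * / d * (Rabs (u - t) + Rabs (v - x))) with
    (2 * (Rabs (u - t) * / d) + 2 * (Rabs (v - x) * / d)) by ring.
  lra.
Qed.

Lemma triangle_cutoff_continuity s d t x : 0 < d -> continuity_2d_pt (triangle_cutoff s d) t x.
Proof.
  intros Hd. apply (lipschitz_continuity_2d_pt _ (2 / d) 1); [lra|]. intros u v _ _.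
  eapply Rle_trans; [|apply (ramp_triple_lipschitz s d t x u v Hd)].
  unfold triangle_cutoff.
  generalize (ramp_range d u) (ramp_range d (v - u)) (ramp_range d (s - v))
    (ramp_range d t) (ramp_range d (x - t)) (ramp_range d (s - x)).
  generalize (ramp d u) (ramp d (v - u)) (ramp d (s - v))
    (ramp d t) (ramp d (x - t)) (ramp d (s - x)).
  intros a' b' c' a b c Ha' Hb' Hc' Ha Hb Hc.
  replace (a' * b' * c' - a * b * c) with
    ((a' - a) * (b' * c') + (b' - b) * (a * c') + (c' - c) * (a * b)) by ring.
  assert (Bound : forall e p, 0 <= p <= 1 -> Rabs (e * p) <= Rabs e).
  { intros e p Hp. rewrite Rabs_mult, (Rabs_pos_eq p) by lra.
    pose proof (Rabs_pos e). nra. }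
  pose proof (Bound (a' - a) (b' * c') ltac:(split; nra)).
  pose proof (Bound (b' - b) (a * c') ltac:(split; nra)).
  pose proof (Bound (c' - c) (a * b) ltac:(split; nra)).
  pose proof (Rabs_triang ((a' - a) * (b' * c') + (b' - b) * (a * c')) ((c' - c) * (a * b))).
  pose proof (Rabs_triang ((a' - a) * (b' * c')) ((b' - b) * (a * c'))). lra.
Qed.

Lemma triangle_defect_continuity s d t x : 0 < d -> continuity_2d_pt (triangle_defect s d) t x.
Proof.
  intros Hd. apply (lipschitz_continuity_2d_pt _ (2 / d) 1); [lra|]. intros u v _ _.
  eapply Rle_trans; [|apply (ramp_triple_lipschitz s d t x u v Hd)].
  unfold triangle_defect.
  replace (1 - ramp d u + (1 - ramp d (v - u)) + (1 - ramp d (s - v)) -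
           (1 - ramp d t + (1 - ramp d (x - t)) + (1 - ramp d (s - x))))
    with (- (ramp d u - ramp d t) + - (ramp d (v - u) - ramp d (x - t)) +
          - (ramp d (s - v) - ramp d (s - x))) by ring.
  eapply Rle_trans; [apply Rabs_triang|]. rewrite Rabs_Ropp.
  eapply Rle_trans; [apply Rplus_le_compat_r, Rabs_triang|]. rewrite !Rabs_Ropp. lra.
Qed.

Lemma triangle_defect_integral_dx s d t : 0 < d -> 0 <= t <= s ->
  Defs.RInt (triangle_defect s d t) t s <= (1 - ramp d t) * s + 4 * d.
Proof.
  intros Hd Ht. unfold triangle_defect.
  assert (E1 : ex_RInt (fun x => 1 - ramp d (x - t)) t s)
    by (apply ex_RInt_ramp_defect; auto; intros; reg).
  assert (E2 : ex_RInt (fun x => 1 - ramp d (s - x)) t s)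
    by (apply ex_RInt_ramp_defect; auto; intros; reg).
  rewrite (Defs_RInt_plus (fun x => 1 - ramp d t + (1 - ramp d (x - t)))), Defs_RInt_plus,
    Defs_RInt_const; auto; try apply ex_RInt_const.
  - pose proof (ramp_defect_integral_left d t s Hd ltac:(lra)).
    pose proof (ramp_defect_integral_right d t s Hd ltac:(lra)). pose proof (ramp_range d t). nra.
  - apply (ex_RInt_plus (V := R_NormedModule)); auto. apply ex_RInt_const.
Qed.

Lemma triangle_defect_integral_dt s d x : 0 < d -> 0 <= x <= s ->
  Defs.RInt (fun t => triangle_defect s d t x) 0 x <= 4 * d + (1 - ramp d (s - x)) * s.
Proof.
  intros Hd Hx. unfold triangle_defect.
  assert (E1 : ex_RInt (fun t => 1 - ramp d t) 0 x)
    by (apply (ex_RInt_ramp_defect d (fun t => t)); auto; intros; reg).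
  assert (E2 : ex_RInt (fun t => 1 - ramp d (x - t)) 0 x)
    by (apply ex_RInt_ramp_defect; auto; intros; reg).
  rewrite (Defs_RInt_plus (fun t => 1 - ramp d t + (1 - ramp d (x - t)))), Defs_RInt_plus,
    Defs_RInt_const; auto; try apply ex_RInt_const.
  - pose proof (ramp_defect_integral d x Hd ltac:(lra)).
    pose proof (ramp_defect_integral_right d 0 x Hd ltac:(lra)). pose proof (ramp_range d (s - x)).
    nra.
  - apply (ex_RInt_plus (V := R_NormedModule)); auto.
Qed.

Section TriangleFubini.

Variables (F : R -> R -> R) (s M : R).
Hypothesis Hs : 0 <= s.
Hypothesis HM : 0 <= M.
Hypothesis F_bounded : forall t x, 0 <= t -> t <= x -> x <= s -> Rabs (F t x) <= M.
Hypothesis F_continuous : forall t x, 0 < t -> t < x -> x < s -> continuity_2d_pt F t x.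
Hypothesis F_ex_dx : forall t, 0 <= t <= s -> ex_RInt (F t) t s.
Hypothesis F_ex_dx_dt : ex_RInt (fun t => Defs.RInt (F t) t s) 0 s.
Hypothesis F_ex_dt : forall x, 0 <= x <= s -> ex_RInt (fun t => F t x) 0 x.
Hypothesis F_ex_dt_dx : ex_RInt (fun x => Defs.RInt (fun t => F t x) 0 x) 0 s.

Let F_cut d t x := triangle_cutoff s d t x * F t x.

Lemma cutoff_bounded d t x : 0 < d -> Rabs (F_cut d t x) <= M * triangle_cutoff s d t x.
Proof.
  intros Hd. unfold F_cut. pose proof (triangle_cutoff_range s d t x).
  destruct (Rlt_dec 0 (triangle_cutoff s d t x)) as [P|P].
  - destruct (triangle_cutoff_pos s d t x Hd P) as [A [B C]].
    rewrite Rabs_mult, Rabs_pos_eq, Rmult_comm by lra.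
    apply Rmult_le_compat_r; [lra|]. apply F_bounded; lra.
  - replace (triangle_cutoff s d t x) with 0 by lra. rewrite Rmult_0_l, Rabs_R0. lra.
Qed.

Lemma cutoff_continuity d t x : 0 < d -> continuity_2d_pt (F_cut d) t x.
Proof.
  intros Hd. destruct (Rlt_dec 0 (triangle_cutoff s d t x)) as [P|P].
  - destruct (triangle_cutoff_pos s d t x Hd P) as [A [B C]].
    apply continuity_2d_pt_mult; [apply triangle_cutoff_continuity; auto|apply F_continuous; lra].
  - pose proof (triangle_cutoff_range s d t x).
    assert (Z : triangle_cutoff s d t x = 0) by lra.
    intros eps. assert (He : 0 < eps / (M + 1)) by (apply Rdiv_lt_0_compat; [apply cond_pos|lra]).
    destruct (triangle_cutoff_continuity s d t x Hd (mkposreal _ He)) as [e He'].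
    exists e. intros u v Hu Hv. specialize (He' u v Hu Hv). simpl in He'.
    unfold F_cut at 2. rewrite Z, Rmult_0_l, Rminus_0_r in *.
    rewrite Rabs_pos_eq in He' by apply triangle_cutoff_range.
    eapply Rle_lt_trans; [apply cutoff_bounded; auto|].
    apply Rle_lt_trans with ((M + 1) * triangle_cutoff s d u v).
    + apply Rmult_le_compat_r; [apply triangle_cutoff_range|lra].
    + apply Rmult_lt_compat_l with (r := M + 1) in He'; [|lra].
      replace ((M + 1) * (eps / (M + 1))) with (pos eps) in He' by (field; lra). exact He'.
Qed.

Lemma cutoff_ex_RInt_dx d t a b : 0 < d -> ex_RInt (F_cut d t) a b.
Proof. intros Hd. apply ex_RInt_continuity_2d_slice. intros; apply cutoff_continuity; auto. Qed.

Lemma cutoff_ex_RInt_dt d x a b : 0 < d -> ex_RInt (fun t => F_cut d t x) a b.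
Proof.
  intros Hd. apply (ex_RInt_continuity_2d_slice (fun u v => F_cut d v u)).
  intros; apply continuity_2d_pt_swap, cutoff_continuity; auto.
Qed.

Lemma cutoff_extend_dx d t : 0 < d -> 0 <= t <= s ->
  Defs.RInt (F_cut d t) t s = Defs.RInt (F_cut d t) 0 s.
Proof.
  intros Hd Ht. rewrite <- (Defs_RInt_Chasles (F_cut d t) 0 t s) by (apply cutoff_ex_RInt_dx; auto).
  rewrite (Defs_RInt_ext (F_cut d t) (fun _ => 0) 0 t), Defs_RInt_const; [ring|].
  intros x Hx. rewrite Rmin_left, Rmax_right in Hx by lra.
  unfold F_cut, triangle_cutoff. rewrite (ramp_0 d (x - t)) by lra. ring.
Qed.

Lemma cutoff_extend_dt d x : 0 < d -> 0 <= x <= s ->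
  Defs.RInt (fun t => F_cut d t x) 0 x = Defs.RInt (fun t => F_cut d t x) 0 s.
Proof.
  intros Hd Hx. rewrite <- (Defs_RInt_Chasles (fun t => F_cut d t x) 0 x s)
    by (apply cutoff_ex_RInt_dt; auto).
  rewrite (Defs_RInt_ext (fun t => F_cut d t x) (fun _ => 0) x s), Defs_RInt_const; [ring|].
  intros t Ht. rewrite Rmin_left, Rmax_right in Ht by lra.
  unfold F_cut, triangle_cutoff. rewrite (ramp_0 d (x - t)) by lra. ring.
Qed.

Lemma cutoff_ex_RInt_dx_dt d : 0 < d -> ex_RInt (fun t => Defs.RInt (F_cut d t) t s) 0 s.
Proof.
  intros Hd. apply (ex_RInt_ext (fun t => Defs.RInt (F_cut d t) 0 s)).
  - intros t Ht. rewrite Rmin_left, Rmax_right in Ht by lra. symmetry.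
    apply cutoff_extend_dx; auto; lra.
  - apply ex_RInt_continuity_pt. intros; apply continuity_pt_RInt_param.
    intros; apply cutoff_continuity; auto.
Qed.

Lemma cutoff_ex_RInt_dt_dx d : 0 < d -> ex_RInt (fun x => Defs.RInt (fun t => F_cut d t x) 0 x) 0 s.
Proof.
  intros Hd. apply (ex_RInt_ext (fun x => Defs.RInt (fun t => F_cut d t x) 0 s)).
  - intros x Hx. rewrite Rmin_left, Rmax_right in Hx by lra. symmetry.
    apply cutoff_extend_dt; auto; lra.
  - apply ex_RInt_continuity_pt. intros; apply (continuity_pt_RInt_param (fun u v => F_cut d v u)).
    intros; apply continuity_2d_pt_swap, cutoff_continuity; auto.
Qed.

Lemma cutoff_Fubini d : 0 < d ->
  Defs.RInt (fun t => Defs.RInt (F_cut d t) t s) 0 s =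
  Defs.RInt (fun x => Defs.RInt (fun t => F_cut d t x) 0 x) 0 s.
Proof.
  intros Hd.
  rewrite (Defs_RInt_ext _ (fun t => Defs.RInt (F_cut d t) 0 s)).
  - rewrite Defs_RInt_Fubini_rect by (auto; intros; apply cutoff_continuity; auto).
    apply Defs_RInt_ext. intros x Hx. rewrite Rmin_left, Rmax_right in Hx by lra.
    symmetry. apply cutoff_extend_dt; auto; lra.
  - intros t Ht. rewrite Rmin_left, Rmax_right in Ht by lra. apply cutoff_extend_dx; auto; lra.
Qed.

Lemma cutoff_error_pointwise d t x : 0 <= t -> t <= x -> x <= s ->
  Rabs (F t x - F_cut d t x) <= M * triangle_defect s d t x.
Proof.
  intros Ht Htx Hx. unfold F_cut. pose proof (triangle_cutoff_range s d t x).
  replace (F t x - triangle_cutoff s d t x * F t x) with ((1 - triangle_cutoff s d t x) * F t x)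
    by ring.
  rewrite Rabs_mult, Rabs_pos_eq, Rmult_comm by lra.
  pose proof (triangle_cutoff_defect s d t x). pose proof (F_bounded t x Ht Htx Hx).
  pose proof (Rabs_pos (F t x)). nra.
Qed.

Lemma cutoff_error_dx_dt d : 0 < d ->
  Rabs (Defs.RInt (fun t => Defs.RInt (F t) t s) 0 s -
        Defs.RInt (fun t => Defs.RInt (F_cut d t) t s) 0 s) <= 6 * M * s * d.
Proof.
  intros Hd.
  assert (Eb : ex_RInt (fun t => M * ((1 - ramp d t) * s + 4 * d)) 0 s).
  { apply ex_RInt_continuity_pt. intros t.
    apply continuity_pt_mult; [reg|]. apply continuity_pt_plus; [|reg].
    apply continuity_pt_mult; [|reg]. apply (continuity_pt_ramp_comp d (fun t => t)); auto. reg. }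
  eapply Rle_trans; [apply (Defs_RInt_diff_abs_le _ _ _ 0 s Hs F_ex_dx_dt
                           (cutoff_ex_RInt_dx_dt d Hd) Eb)|].
  - intros t Ht. eapply Rle_trans.
    + apply (Defs_RInt_diff_abs_le _ _ (fun x => M * triangle_defect s d t x)); try lra.
      * apply F_ex_dx; lra.
      * apply cutoff_ex_RInt_dx; auto.
      * apply (ex_RInt_scal (V := R_NormedModule)),
          (ex_RInt_continuity_2d_slice (triangle_defect s d)).
        intros; apply triangle_defect_continuity; auto.
      * intros x Hx. apply cutoff_error_pointwise; lra.
    + rewrite Defs_RInt_scal. apply Rmult_le_compat_l; auto. apply triangle_defect_integral_dx; lra.
  - rewrite Defs_RInt_scal. pose proof (ramp_defect_affine_integral d s Hd Hs).
    replace (6 * M * s * d) with (M * (6 * s * d)) by ring. apply Rmult_le_compat_l; auto.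
Qed.

Lemma cutoff_error_dt_dx d : 0 < d ->
  Rabs (Defs.RInt (fun x => Defs.RInt (fun t => F t x) 0 x) 0 s -
        Defs.RInt (fun x => Defs.RInt (fun t => F_cut d t x) 0 x) 0 s) <= 6 * M * s * d.
Proof.
  intros Hd.
  assert (Eb : ex_RInt (fun x => M * (4 * d + (1 - ramp d (s - x)) * s)) 0 s).
  { apply ex_RInt_continuity_pt. intros x.
    apply continuity_pt_mult; [reg|]. apply continuity_pt_plus; [reg|].
    apply continuity_pt_mult; [|reg]. apply continuity_pt_ramp_comp; auto. reg. }
  eapply Rle_trans; [apply (Defs_RInt_diff_abs_le _ _ _ 0 s Hs F_ex_dt_dx
                           (cutoff_ex_RInt_dt_dx d Hd) Eb)|].
  - intros x Hx. eapply Rle_trans.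
    + apply (Defs_RInt_diff_abs_le _ _ (fun t => M * triangle_defect s d t x)); try lra.
      * apply F_ex_dt; lra.
      * apply cutoff_ex_RInt_dt; auto.
      * apply (ex_RInt_scal (V := R_NormedModule)),
          (ex_RInt_continuity_2d_slice (fun u v => triangle_defect s d v u)).
        intros; apply continuity_2d_pt_swap, triangle_defect_continuity; auto.
      * intros t Ht. apply cutoff_error_pointwise; lra.
    + rewrite Defs_RInt_scal. apply Rmult_le_compat_l; auto. apply triangle_defect_integral_dt; lra.
  - rewrite Defs_RInt_scal, Defs_RInt_reflect,
      (Defs_RInt_ext_all _ (fun t => (1 - ramp d t) * s + 4 * d))
      by (intros; replace (s - (s - x)) with x by ring; ring).
    pose proof (ramp_defect_affine_integral d s Hd Hs).
    replace (6 * M * s * d) with (M * (6 * s * d)) by ring. apply Rmult_le_compat_l; auto.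
Qed.

(* Cut [F] off continuously near the boundary of the triangle, where it may be discontinuous:
   the cut-off function satisfies the rectangle Fubini theorem, at an error O(d). *)
Theorem Defs_RInt_Fubini_triangle :
  Defs.RInt (fun t => Defs.RInt (F t) t s) 0 s =
  Defs.RInt (fun x => Defs.RInt (fun t => F t x) 0 x) 0 s.
Proof.
  apply (eq_of_abs_le_all_pos _ _ (12 * M * s)). intros d Hd.
  pose proof (cutoff_error_dx_dt d Hd). pose proof (cutoff_error_dt_dx d Hd).
  pose proof (cutoff_Fubini d Hd).
  set (A := Defs.RInt (fun t => Defs.RInt (F t) t s) 0 s) in *.
  set (B := Defs.RInt (fun x => Defs.RInt (fun t => F t x) 0 x) 0 s) in *.
  set (A' := Defs.RInt (fun t => Defs.RInt (F_cut d t) t s) 0 s) in *.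
  set (B' := Defs.RInt (fun x => Defs.RInt (fun t => F_cut d t x) 0 x) 0 s) in *.
  replace (A - B) with ((A - A') - (B - B')) by lra.
  eapply Rle_trans; [apply Rabs_triang|]. rewrite Rabs_Ropp. lra.
Qed.

End TriangleFubini.

(** * Iterated integrals over simplices *)

Lemma firstn_length_app {A} (u w : list A) : firstn (length u) (u ++ w) = u.
Proof. induction u; simpl; [destruct w|f_equal]; auto. Qed.

Lemma skipn_length_app {A} (u w : list A) : skipn (length u) (u ++ w) = w.
Proof. induction u; simpl; auto. Qed.

Definition lsum (l : list R) : R := fold_right Rplus 0 l.

Definition lscale (c : R) (w : list R) : list R := map (Rmult c) w.

Lemma lsum_cons t u : lsum (t :: u) = t + lsum u.
Proof. reflexivity. Qed.

Lemma lsum_app u w : lsum (u ++ w) = lsum u + lsum w.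
Proof. induction u; simpl; [ring|]. rewrite IHu. ring. Qed.

Lemma lsum_lscale c w : lsum (lscale c w) = c * lsum w.
Proof. induction w as [|a w IH]; unfold lscale, lsum in *; simpl; [ring|]. rewrite IH. ring. Qed.

Lemma lsum_nonneg u : (forall z, In z u -> 0 <= z) -> 0 <= lsum u.
Proof.
  induction u as [|a u IH]; intros H; simpl; [lra|].
  pose proof (H a (or_introl eq_refl)). pose proof (IH (fun z Hz => H z (or_intror Hz))).
  unfold lsum in *. simpl. lra.
Qed.

Lemma in_le_lsum u z : (forall z, In z u -> 0 <= z) -> In z u -> z <= lsum u.
Proof.
  induction u as [|a u IH]; intros H Hz; [destruct Hz|]. rewrite lsum_cons.
  pose proof (H a (or_introl eq_refl)). pose proof (lsum_nonneg u (fun z Hz => H z (or_intror Hz))).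
  destruct Hz as [<-|Hz]; [lra|]. pose proof (IH (fun z Hz => H z (or_intror Hz)) Hz). lra.
Qed.

Lemma length_lscale c u : length (lscale c u) = length u.
Proof. apply length_map. Qed.

Lemma lscale_lscale c d u : lscale c (lscale d u) = lscale (c * d) u.
Proof. unfold lscale. rewrite map_map. apply map_ext. intros; ring. Qed.

Lemma lscale_1 u : lscale 1 u = u.
Proof. unfold lscale. rewrite <- (map_id u) at 2. apply map_ext. intros; ring. Qed.

Lemma simplex_int_ext k : forall h1 h2 s, (forall v, length v = k -> h1 v = h2 v) ->
  simplex_int k h1 s = simplex_int k h2 s.
Proof.
  induction k; intros h1 h2 s H; simpl; [apply H; reflexivity|].
  apply Defs_RInt_ext_all; intro t. apply IHk. intros v Hv. apply H. simpl; auto.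
Qed.

Lemma simplex_int_scal k : forall h c s,
  simplex_int k (fun v => c * h v) s = c * simplex_int k h s.
Proof.
  induction k; intros h c s; simpl; [reflexivity|].
  rewrite <- Defs_RInt_scal. apply Defs_RInt_ext_all; intro t. apply IHk.
Qed.

Lemma simplex_int_app a : forall b h s, simplex_int (a + b) h s =
  simplex_int a (fun u => simplex_int b (fun w => h (u ++ w)) (s - lsum u)) s.
Proof.
  induction a; intros b h s; simpl; [rewrite Rminus_0_r; reflexivity|].
  apply Defs_RInt_ext_all; intro t. rewrite IHa. apply simplex_int_ext; intros v _.
  f_equal. unfold lsum; simpl; ring.
Qed.

Lemma simplex_int_dilate k : forall h c r,
  simplex_int k h (c * r) = c ^ k * simplex_int k (fun w => h (lscale c w)) r.
Proof.
  induction k; intros h c r; simpl; [ring|].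
  destruct (Req_dec c 0) as [->|Hc].
  - rewrite Rmult_0_l, Defs_RInt_point. ring.
  - rewrite Defs_RInt_dilate, Rmult_assoc by auto. f_equal. rewrite <- Defs_RInt_scal.
    apply Defs_RInt_ext_all; intro y.
    replace (c * r - c * y) with (c * (r - y)) by ring. apply IHk.
Qed.

Lemma simplex_int_dilate_1 k h c :
  simplex_int k h c = c ^ k * simplex_int k (fun w => h (lscale c w)) 1.
Proof. rewrite <- simplex_int_dilate, Rmult_1_r. reflexivity. Qed.

Lemma Defs_RInt_pow_reflect n s : Defs.RInt (fun t => (s - t) ^ n) 0 s = s ^ S n / INR (S n).
Proof.
  rewrite Defs_RInt_reflect, (Defs_RInt_ext_all _ (fun t => t ^ n)) by (intros; f_equal; ring).
  rewrite Defs_RInt_correct by (eexists; apply is_RInt_pow).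
  rewrite (is_RInt_unique _ _ _ _ (is_RInt_pow 0 s n)), pow_i by lia. unfold Rdiv. ring.
Qed.

Lemma simplex_int_pow k : forall p s,
  simplex_int k (fun u => (s - lsum u) ^ p) s = s ^ (k + p) * INR (fact p) / INR (fact (k + p)).
Proof.
  induction k; intros p s.
  - simpl. rewrite Rminus_0_r. field. apply Rgt_not_eq, INR_fact_lt_0.
  - simpl.
    rewrite (Defs_RInt_ext_all _ (fun t => INR (fact p) / INR (fact (k + p)) * (s - t) ^ (k + p))).
    + rewrite Defs_RInt_scal, Defs_RInt_pow_reflect, plus_INR, mult_INR, S_INR.
      simpl (s ^ S (k + p)). pose proof (INR_fact_lt_0 (k + p)). pose proof (pos_INR (k + p)).
      field. repeat split; nra.
    + intros t. transitivity (simplex_int k (fun u => (s - t - lsum u) ^ p) (s - t)).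
      * apply simplex_int_ext; intros v _. f_equal. unfold lsum; simpl; ring.
      * rewrite IHk. field. apply Rgt_not_eq, INR_fact_lt_0.
Qed.

Definition reflect_last (s : R) (v : list R) : list R := removelast v ++ [s - lsum v].

Lemma reflect_last_app s v t : reflect_last s (v ++ [t]) = v ++ [s - lsum v - t].
Proof.
  unfold reflect_last. rewrite removelast_last, lsum_app.
  replace (lsum [t]) with t by (unfold lsum; simpl; ring). do 2 f_equal. ring.
Qed.

(* The innermost coordinate runs over an interval [[0, s - lsum v]], reflected onto itself. *)
Lemma simplex_int_reflect_last k h s :
  simplex_int (S k) (fun v => h (reflect_last s v)) s = simplex_int (S k) h s.
Proof.
  replace (S k) with (k + 1)%nat by lia. rewrite !simplex_int_app.
  apply simplex_int_ext; intros u _. simpl.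
  rewrite (Defs_RInt_reflect (fun t => h (u ++ [t]))). apply Defs_RInt_ext_all; intro t.
  rewrite reflect_last_app. do 3 f_equal.
Qed.

Definition in_std_simplex (k : nat) (s : R) (v : list R) : Prop :=
  length v = k /\ (forall x, In x v -> 0 <= x) /\ lsum v <= s.

Fixpoint convex_comb (l : R) (u v : list R) : list R :=
  match u, v with
  | x :: u', y :: v' => (l * x + (1 - l) * y) :: convex_comb l u' v'
  | _, _ => []
  end.

Definition convex_on_simplex (k : nat) (s : R) (h : list R -> R) : Prop :=
  forall u v l, in_std_simplex k s u -> in_std_simplex k s v -> 0 <= l <= 1 ->
    h (convex_comb l u v) <= l * h u + (1 - l) * h v.

Fixpoint iter_integrable (k : nat) (h : list R -> R) (s : R) : Prop :=
  match k with
  | O => True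
  | S k' => ex_RInt (fun t => simplex_int k' (fun v => h (t :: v)) (s - t)) 0 s /\
            forall t, 0 <= t <= s -> iter_integrable k' (fun v => h (t :: v)) (s - t)
  end.

Lemma in_std_simplex_cons k s t v :
  in_std_simplex (S k) s (t :: v) <-> 0 <= t /\ in_std_simplex k (s - t) v.
Proof.
  unfold in_std_simplex. rewrite lsum_cons. cbn [length In]. split.
  - intros [Hl [Hp Hs]]. repeat split; auto; lra.
  - intros [Ht [Hl [Hp Hs]]]. repeat split; auto; [|lra]. intros x [<-|Hx]; auto.
Qed.

Lemma in_std_simplex_nil s : 0 <= s -> in_std_simplex 0 s [].
Proof. intros; repeat split; simpl; auto. intros x []. Qed.

Lemma in_std_simplex_length k s v : in_std_simplex k s v -> length v = k.
Proof. intros [H _]; auto. Qed.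

Lemma in_std_simplex_lscale k c r w : 0 <= c -> in_std_simplex k r w ->
  in_std_simplex k (c * r) (lscale c w).
Proof.
  intros Hc [L [P S]]. repeat split.
  - rewrite length_lscale; auto.
  - intros x Hx. unfold lscale in Hx. apply in_map_iff in Hx. destruct Hx as [y [<- Hy]].
    apply Rmult_le_pos; auto.
  - rewrite lsum_lscale. apply Rmult_le_compat_l; auto.
Qed.

Lemma convex_comb_length u : forall v l, length u = length v ->
  length (convex_comb l u v) = length u.
Proof. induction u; intros v l H; destruct v; simpl in *; try lia. rewrite IHu; auto. Qed.

Lemma lsum_convex_comb u : forall v l, length u = length v ->
  lsum (convex_comb l u v) = l * lsum u + (1 - l) * lsum v.
Proof.
  induction u; intros v l H; destruct v; simpl in H; try lia; [unfold lsum; simpl; ring|].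
  cbn [convex_comb]. rewrite !lsum_cons, IHu by lia. ring.
Qed.

Lemma in_std_simplex_convex_comb k s u v l :
  in_std_simplex k s u -> in_std_simplex k s v -> 0 <= l <= 1 ->
  in_std_simplex k s (convex_comb l u v).
Proof.
  intros [Lu [Pu Su]] [Lv [Pv Sv]] Hl. repeat split.
  - rewrite convex_comb_length; lia.
  - clear Lu Lv Su Sv. revert v Pv.
    induction u as [|a u IH]; intros [|b v] Pv x Hx; simpl in Hx; try tauto.
    destruct Hx as [<-|Hx].
    + pose proof (Pu a (or_introl eq_refl)). pose proof (Pv b (or_introl eq_refl)). nra.
    + apply (IH (fun z Hz => Pu z (or_intror Hz)) v (fun z Hz => Pv z (or_intror Hz))); auto.
  - rewrite lsum_convex_comb by lia. nra.
Qed.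

Lemma convex_comb_app l u1 : forall v1 u2 v2, length u1 = length v1 ->
  convex_comb l (u1 ++ u2) (v1 ++ v2) = convex_comb l u1 v1 ++ convex_comb l u2 v2.
Proof.
  induction u1; intros v1 u2 v2 H; destruct v1; simpl in *; try lia; auto.
  f_equal. apply IHu1. lia.
Qed.

Lemma convex_comb_lscale l c u : forall v, length u = length v ->
  convex_comb l (lscale c u) (lscale c v) = lscale c (convex_comb l u v).
Proof.
  induction u; intros v H; destruct v; simpl in H; try lia; unfold lscale in *; simpl; auto.
  f_equal; [ring|]. apply IHu; lia.
Qed.

Lemma convex_comb_lscale_same l a b w :
  convex_comb l (lscale a w) (lscale b w) = lscale (l * a + (1 - l) * b) w.
Proof. induction w; unfold lscale in *; simpl; auto. f_equal; [ring|auto]. Qed.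

Lemma convex_on_simplex_comp k s h j r (A : list R -> list R) : convex_on_simplex k s h ->
  (forall u, in_std_simplex j r u -> in_std_simplex k s (A u)) ->
  (forall u v l, in_std_simplex j r u -> in_std_simplex j r v -> 0 <= l <= 1 ->
     A (convex_comb l u v) = convex_comb l (A u) (A v)) ->
  convex_on_simplex j r (fun u => h (A u)).
Proof. intros Hc HA HL u v l Hu Hv Hl. rewrite HL; auto. Qed.

Lemma convex_on_simplex_ext k s h1 h2 : (forall v, in_std_simplex k s v -> h1 v = h2 v) ->
  convex_on_simplex k s h1 -> convex_on_simplex k s h2.
Proof. intros E Hc u v l Hu Hv Hl. rewrite <- !E; auto. apply in_std_simplex_convex_comb; auto. Qed.

Lemma convex_on_simplex_cons k s h t : convex_on_simplex (S k) s h -> 0 <= t ->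
  convex_on_simplex k (s - t) (fun v => h (t :: v)).
Proof.
  intros Hc Ht. apply (convex_on_simplex_comp (S k) s h k (s - t) (fun v => t :: v)); auto.
  - intros u Hu. apply in_std_simplex_cons; auto.
  - intros u v l _ _ _. simpl. f_equal. ring.
Qed.

Lemma convex_on_simplex_dilate_cons k s h t : convex_on_simplex (S k) s h -> 0 <= t <= s ->
  convex_on_simplex k 1 (fun w => h (t :: lscale (s - t) w)).
Proof.
  intros Hc Ht. apply (convex_on_simplex_comp (S k) s h k 1 (fun w => t :: lscale (s - t) w)); auto.
  - intros u Hu. apply in_std_simplex_cons. split; [lra|].
    rewrite <- (Rmult_1_r (s - t)) at 1. apply in_std_simplex_lscale; auto; lra.
  - intros u v l Hu Hv Hl. simpl. f_equal; [ring|].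
    symmetry; apply convex_comb_lscale.
    rewrite (in_std_simplex_length _ _ _ Hu), (in_std_simplex_length _ _ _ Hv); auto.
Qed.

Lemma iter_integrable_lin k : forall h1 h2 s a b, 0 <= s ->
  iter_integrable k h1 s -> iter_integrable k h2 s ->
  iter_integrable k (fun v => a * h1 v + b * h2 v) s /\
  simplex_int k (fun v => a * h1 v + b * h2 v) s = a * simplex_int k h1 s + b * simplex_int k h2 s.
Proof.
  induction k; intros h1 h2 s a b Hs G1 G2; [simpl; auto|].
  destruct G1 as [E1 G1], G2 as [E2 G2].
  assert (Hin : forall t, 0 <= t <= s ->
    iter_integrable k (fun v => a * h1 (t :: v) + b * h2 (t :: v)) (s - t) /\
    simplex_int k (fun v => a * h1 (t :: v) + b * h2 (t :: v)) (s - t) =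
    a * simplex_int k (fun v => h1 (t :: v)) (s - t) +
    b * simplex_int k (fun v => h2 (t :: v)) (s - t))
    by (intros t Ht; apply IHk; auto; lra).
  assert (Heq : forall t, Rmin 0 s < t < Rmax 0 s ->
    a * simplex_int k (fun v => h1 (t :: v)) (s - t) +
    b * simplex_int k (fun v => h2 (t :: v)) (s - t) =
    simplex_int k (fun v => a * h1 (t :: v) + b * h2 (t :: v)) (s - t)).
  { intros t Ht. rewrite Rmin_left, Rmax_right in Ht by lra. symmetry; apply Hin; lra. }
  split; [split|].
  - eapply ex_RInt_ext; [apply Heq|].
    apply (ex_RInt_plus (V := R_NormedModule)); apply (ex_RInt_scal (V := R_NormedModule)); auto.
  - intros t Ht; apply Hin; auto.
  - simpl. rewrite <- (Defs_RInt_ext _ _ _ _ Heq), Defs_RInt_plus, !Defs_RInt_scal; auto;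
      apply (ex_RInt_scal (V := R_NormedModule)); auto.
Qed.

Lemma simplex_int_le k : forall h1 h2 s, 0 <= s ->
  iter_integrable k h1 s -> iter_integrable k h2 s ->
  (forall v, in_std_simplex k s v -> h1 v <= h2 v) -> simplex_int k h1 s <= simplex_int k h2 s.
Proof.
  induction k; intros h1 h2 s Hs G1 G2 H; simpl; [apply H, in_std_simplex_nil; auto|].
  destruct G1 as [E1 G1], G2 as [E2 G2].
  apply Defs_RInt_le; auto. intros t Ht. apply IHk; try apply G1; try apply G2; try lra.
  intros v Hv. apply H, in_std_simplex_cons. split; auto; lra.
Qed.

Lemma simplex_int_le_lin k r H1 H2 H3 a b : 0 <= r ->
  iter_integrable k H1 r -> iter_integrable k H2 r -> iter_integrable k H3 r ->
  (forall w, in_std_simplex k r w -> H3 w <= a * H1 w + b * H2 w) ->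
  simplex_int k H3 r <= a * simplex_int k H1 r + b * simplex_int k H2 r.
Proof.
  intros Hr G1 G2 G3 H. destruct (iter_integrable_lin k H1 H2 r a b Hr G1 G2) as [G E].
  rewrite <- E. apply simplex_int_le; auto.
Qed.

(* The inner integral is [(s - t) ^ k] times a convex function of [t], by dilation. *)
Theorem convex_iter_integrable k : forall s h, 0 <= s ->
  convex_on_simplex k s h -> iter_integrable k h s.
Proof.
  induction k; intros s h Hs Hc; [simpl; auto|].
  set (H := fun t w => h (t :: lscale (s - t) w)).
  assert (HI : forall t, 0 <= t <= s -> iter_integrable k (H t) 1)
    by (intros; apply IHk; [lra|apply convex_on_simplex_dilate_cons; auto]).
  set (N := fun t => simplex_int k (H t) 1).
  assert (HN : convex_on_interval N 0 s).
  { intros t1 t2 l Ht1 Ht2 Hl. unfold N.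
    apply simplex_int_le_lin; auto; try lra; [apply HI; nra|].
    intros w Hw. unfold H.
    replace (s - (l * t1 + (1 - l) * t2)) with (l * (s - t1) + (1 - l) * (s - t2)) by ring.
    rewrite <- convex_comb_lscale_same.
    change ((l * t1 + (1 - l) * t2) :: convex_comb l (lscale (s - t1) w) (lscale (s - t2) w))
      with (convex_comb l (t1 :: lscale (s - t1) w) (t2 :: lscale (s - t2) w)).
    apply Hc; auto; apply in_std_simplex_cons; split; try lra;
      rewrite <- (Rmult_1_r (_ - _)) at 1; apply in_std_simplex_lscale; auto; lra. }
  split.
  - apply (ex_RInt_ext (fun t => (s - t) ^ k * N t)).
    + intros t _. symmetry. apply simplex_int_dilate_1.
    + apply (ex_RInt_mul_convex _ _ 0 s (s ^ k)); auto.
      * intros x Hx. rewrite Rabs_pos_eq by (apply pow_le; lra). apply pow_incr; lra.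
      * intros; reg.
  - intros t Ht. apply IHk; [lra|]. apply convex_on_simplex_cons; auto; lra.
Qed.

(** * Invariance under permutations of the coordinates *)

Lemma convex_on_interval_Defs_RInt_param (F : R -> R -> R) a b : a <= b ->
  (forall x, a <= x <= b -> ex_RInt (F x) 0 1) ->
  (forall v, 0 <= v <= 1 -> convex_on_interval (fun x => F x v) a b) ->
  convex_on_interval (fun x => Defs.RInt (F x) 0 1) a b.
Proof.
  intros Hab Hex Hc x y l Hx Hy Hl.
  assert (Hxy : a <= l * x + (1 - l) * y <= b) by nra.
  rewrite <- !Defs_RInt_scal, <- Defs_RInt_plus
    by (apply (ex_RInt_scal (V := R_NormedModule)); auto).
  apply Defs_RInt_le; try lra; auto.
  - apply (ex_RInt_plus (V := R_NormedModule)); apply (ex_RInt_scal (V := R_NormedModule)); auto.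
  - intros v Hv. apply (Hc v ltac:(lra)); auto.
Qed.

Section SimplexTriangle.

Variables (k : nat) (s : R) (h : list R -> R).
Hypothesis Hs : 0 <= s.
Hypothesis Hc : convex_on_simplex (S (S k)) s h.

Let slice t u := simplex_int k (fun w => h (t :: u :: lscale (s - t - u) w)) 1.

Lemma slice_dilate t u :
  simplex_int k (fun w => h (t :: u :: w)) (s - t - u) = (s - t - u) ^ k * slice t u.
Proof. apply simplex_int_dilate_1. Qed.

Lemma slice_convex_on_simplex t u : in_triangle s t u ->
  convex_on_simplex k 1 (fun w => h (t :: u :: lscale (s - t - u) w)).
Proof.
  intros [Ht [Hu Htu]].
  apply (convex_on_simplex_dilate_cons k (s - t) (fun v => h (t :: v))); [|lra].
  apply convex_on_simplex_cons; auto.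
Qed.

Lemma slice_convex_on_triangle : convex_on_triangle slice s.
Proof.
  intros t1 u1 t2 u2 l T1 T2 Hl. unfold slice.
  assert (T : in_triangle s (l * t1 + (1 - l) * t2) (l * u1 + (1 - l) * u2)).
  { destruct T1 as [? [? ?]], T2 as [? [? ?]]. unfold in_triangle. nra. }
  apply simplex_int_le_lin; try lra;
    try (apply convex_iter_integrable; [lra|apply slice_convex_on_simplex; auto]).
  - intros w Hw.
    replace (s - (l * t1 + (1 - l) * t2) - (l * u1 + (1 - l) * u2))
      with (l * (s - t1 - u1) + (1 - l) * (s - t2 - u2)) by ring.
    rewrite <- convex_comb_lscale_same.
    change (l * t1 + (1 - l) * t2 :: l * u1 + (1 - l) * u2 ::
            convex_comb l (lscale (s - t1 - u1) w) (lscale (s - t2 - u2) w))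
      with (convex_comb l (t1 :: u1 :: lscale (s - t1 - u1) w)
                          (t2 :: u2 :: lscale (s - t2 - u2) w)).
    destruct T1 as [? [? ?]], T2 as [? [? ?]].
    apply Hc; auto; repeat (apply in_std_simplex_cons; split; [lra|]);
      rewrite <- (Rmult_1_r (_ - _ - _)) at 1; apply in_std_simplex_lscale; auto; lra.
Qed.

Let slice_integrand t x := (s - x) ^ k * slice t (x - t).

Lemma pow_sub_bound x : 0 <= x <= s -> Rabs ((s - x) ^ k) <= s ^ k.
Proof. intros Hx. rewrite Rabs_pos_eq by (apply pow_le; lra). apply pow_incr; lra. Qed.

Lemma slice_ex_RInt_dx t : 0 <= t <= s -> ex_RInt (slice_integrand t) t s.
Proof.
  intros Ht. apply (ex_RInt_mul_convex _ _ t s (s ^ k)); try lra.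
  - intros x1 x2 l Hx1 Hx2 Hl.
    replace (l * x1 + (1 - l) * x2 - t) with (l * (x1 - t) + (1 - l) * (x2 - t)) by ring.
    replace t with (l * t + (1 - l) * t) at 1 by ring.
    apply slice_convex_on_triangle; unfold in_triangle; lra.
  - intros x Hx. apply pow_sub_bound; lra.
  - intros; reg.
Qed.

Lemma slice_ex_RInt_dt x : 0 <= x <= s -> ex_RInt (fun t => slice_integrand t x) 0 x.
Proof.
  intros Hx. apply (ex_RInt_mul_convex (fun t => slice t (x - t)) (fun _ => (s - x) ^ k) 0 x
    (Rabs ((s - x) ^ k))); try lra.
  - intros t1 t2 l Ht1 Ht2 Hl.
    replace (x - (l * t1 + (1 - l) * t2)) with (l * (x - t1) + (1 - l) * (x - t2)) by ring.
    apply slice_convex_on_triangle; unfold in_triangle; lra.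
  - intros; apply Rle_refl.
  - intros; apply continuity_pt_const; intros ? ?; auto.
Qed.

(* Rescaled to [[0, 1]], the inner integral is [x] times a convex function of [x]. *)
Lemma slice_ex_RInt_dt_dx : ex_RInt (fun x => Defs.RInt (fun t => slice_integrand t x) 0 x) 0 s.
Proof.
  set (K := fun x => Defs.RInt (fun v => slice (x * v) (x - x * v)) 0 1).
  apply (ex_RInt_ext (fun x => ((s - x) ^ k * x) * K x)).
  - intros x Hx. rewrite Rmin_left, Rmax_right in Hx by lra. unfold slice_integrand, K.
    rewrite Defs_RInt_scal, Rmult_assoc. f_equal.
    rewrite <- (Rmult_1_r x) at 2. rewrite Defs_RInt_dilate by lra. reflexivity.
  - apply (ex_RInt_mul_convex _ _ 0 s (s ^ k * s)); try lra.
    + apply convex_on_interval_Defs_RInt_param; try lra.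
      * intros x Hx. apply ex_RInt_convex; try lra. intros v1 v2 l Hv1 Hv2 Hl.
        replace (x * (l * v1 + (1 - l) * v2)) with (l * (x * v1) + (1 - l) * (x * v2)) by ring.
        replace (x - (l * (x * v1) + (1 - l) * (x * v2)))
          with (l * (x - x * v1) + (1 - l) * (x - x * v2)) by ring.
        apply slice_convex_on_triangle; unfold in_triangle; nra.
      * intros v Hv x1 x2 l Hx1 Hx2 Hl. cbv beta.
        replace ((l * x1 + (1 - l) * x2) * v) with (l * (x1 * v) + (1 - l) * (x2 * v)) by ring.
        replace (l * x1 + (1 - l) * x2 - (l * (x1 * v) + (1 - l) * (x2 * v)))
          with (l * (x1 - x1 * v) + (1 - l) * (x2 - x2 * v)) by ring.
        apply slice_convex_on_triangle; unfold in_triangle; nra.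
    + intros x Hx. rewrite Rabs_mult, (Rabs_pos_eq x) by lra.
      apply Rmult_le_compat; try apply Rabs_pos; try lra. apply pow_sub_bound; lra.
    + intros. reg.
Qed.

(* Substituting [x = t + u] turns the iterated integral over [(t, u)] into one over the
   triangle [0 <= t <= x <= s], whose order of integration is then exchanged. *)
Theorem simplex_int_triangle :
  simplex_int (S (S k)) h s = Defs.RInt (fun x => Defs.RInt (fun t =>
     simplex_int k (fun w => h (t :: (x - t) :: w)) (s - x)) 0 x) 0 s.
Proof.
  destruct (convex_on_triangle_bounded slice s Hs slice_convex_on_triangle) as [MN HMN].
  assert (MN0 : 0 <= MN)
    by (pose proof (HMN 0 0 ltac:(unfold in_triangle; lra));
        pose proof (Rabs_pos (slice 0 0)); lra).
  assert (ER : forall t x,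
    simplex_int k (fun w => h (t :: (x - t) :: w)) (s - x) = slice_integrand t x).
  { intros. unfold slice_integrand. replace (s - x) with (s - t - (x - t)) by ring.
    apply slice_dilate. }
  rewrite (Defs_RInt_ext_all _ (fun x => Defs.RInt (fun t => slice_integrand t x) 0 x))
    by (intros x; apply Defs_RInt_ext_all; intros t; apply ER).
  assert (EL : forall t,
    simplex_int (S k) (fun v => h (t :: v)) (s - t) = Defs.RInt (slice_integrand t) t s).
  { intros t. simpl. assert (E := Defs_RInt_shift (slice_integrand t) 0 (s - t) t).
    rewrite Rplus_0_l, Rplus_comm, Rplus_minus in E. rewrite E.
    apply Defs_RInt_ext_all; intro u. rewrite <- ER.
    replace (u + t - t) with u by ring. f_equal. ring. }
  change (simplex_int (S (S k)) h s) with
    (Defs.RInt (fun t => simplex_int (S k) (fun v => h (t :: v)) (s - t)) 0 s).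
  rewrite (Defs_RInt_ext_all _ (fun t => Defs.RInt (slice_integrand t) t s)) by apply EL.
  apply (Defs_RInt_Fubini_triangle slice_integrand s (s ^ k * MN)); auto.
  - apply Rmult_le_pos; auto. apply pow_le; auto.
  - intros t x Ht Htx Hx. unfold slice_integrand. rewrite Rabs_mult.
    apply Rmult_le_compat; try apply Rabs_pos; [apply pow_sub_bound; lra|].
    apply HMN; unfold in_triangle; lra.
  - intros t x Ht Htx Hx. apply continuity_2d_pt_mult.
    + apply (continuity_1d_2d_pt_comp (fun v => (s - v) ^ k)); [reg|apply continuity_2d_pt_id2].
    + apply (convex_on_triangle_continuity_shear slice s MN); auto. apply slice_convex_on_triangle.
  - intros t Ht. apply slice_ex_RInt_dx; auto.
  - destruct (convex_iter_integrable (S (S k)) s h Hs Hc) as [E _].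
    apply (ex_RInt_ext (fun t => simplex_int (S k) (fun v => h (t :: v)) (s - t))); auto.
  - intros x Hx. apply slice_ex_RInt_dt; auto.
  - apply slice_ex_RInt_dt_dx.
Qed.

End SimplexTriangle.

Lemma lsum_Permutation u v : Permutation u v -> lsum u = lsum v.
Proof. induction 1; rewrite ?lsum_cons in *; lra. Qed.

Lemma in_std_simplex_Permutation k s u v : Permutation u v ->
  in_std_simplex k s u -> in_std_simplex k s v.
Proof.
  intros P [L [Pos S]]. repeat split.
  - rewrite <- (Permutation_length P); auto.
  - intros x Hx. apply Pos, (Permutation_in x (Permutation_sym P) Hx).
  - rewrite <- (lsum_Permutation _ _ P); auto.
Qed.

Lemma convex_on_simplex_Permutation k s h (A : list R -> list R) :
  convex_on_simplex k s h -> (forall u, Permutation u (A u)) ->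
  (forall u v l, length u = length v -> A (convex_comb l u v) = convex_comb l (A u) (A v)) ->
  convex_on_simplex k s (fun v => h (A v)).
Proof.
  intros Hc HP HA. apply (convex_on_simplex_comp k s h k s A); auto.
  - intros u Hu. apply (in_std_simplex_Permutation k s u); auto.
  - intros u v l Hu Hv _. apply HA.
    rewrite (in_std_simplex_length _ _ _ Hu), (in_std_simplex_length _ _ _ Hv); auto.
Qed.

Definition swap01 (v : list R) : list R :=
  match v with a :: b :: w => b :: a :: w | _ => v end.

Lemma convex_on_simplex_swap01 k s h : convex_on_simplex k s h ->
  convex_on_simplex k s (fun v => h (swap01 v)).
Proof.
  intros Hc. apply convex_on_simplex_Permutation; auto.
  - intros [|a [|b w]]; simpl; auto. apply perm_swap.
  - intros [|a [|b u]] [|c [|d v]] l H; simpl in *; auto; lia.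
Qed.

Lemma simplex_int_swap01 k s h : 0 <= s -> convex_on_simplex (S (S k)) s h ->
  simplex_int (S (S k)) (fun v => h (swap01 v)) s = simplex_int (S (S k)) h s.
Proof.
  intros Hs Hc. rewrite !simplex_int_triangle by (auto; apply convex_on_simplex_swap01; auto).
  apply Defs_RInt_ext_all; intros x. rewrite Defs_RInt_reflect.
  apply Defs_RInt_ext_all; intros t. apply simplex_int_ext; intros w _.
  simpl. replace (x - (x - t)) with t by ring. reflexivity.
Qed.

Definition rot1 (v : list R) : list R := match v with [] => [] | a :: w => w ++ [a] end.

Fixpoint rotn (n : nat) (v : list R) : list R :=
  match n with O => v | S n' => rotn n' (rot1 v) end.

Lemma convex_on_simplex_rot1 k s h : convex_on_simplex k s h ->
  convex_on_simplex k s (fun v => h (rot1 v)).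
Proof.
  intros Hc. apply convex_on_simplex_Permutation; auto.
  - intros [|a w]; simpl; auto. apply Permutation_cons_append.
  - intros [|a u] [|b v] l H; simpl in *; auto; try lia. symmetry. apply convex_comb_app. lia.
Qed.

Lemma convex_on_simplex_rotn n : forall k s h, convex_on_simplex k s h ->
  convex_on_simplex k s (fun v => h (rotn n v)).
Proof.
  induction n; intros k s h Hc; simpl; auto.
  apply (convex_on_simplex_rot1 k s (fun v => h (rotn n v))), IHn, Hc.
Qed.

(* Moving the first coordinate to the end is a product of adjacent transpositions, each of which
   acts on two coordinates of a slice. *)
Lemma simplex_int_rot1 k : forall s h, 0 <= s -> convex_on_simplex k s h ->
  simplex_int k (fun v => h (rot1 v)) s = simplex_int k h s.
Proof.
  induction k as [|[|k] IHk]; intros s h Hs Hc.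
  - reflexivity.
  - apply simplex_int_ext. intros [|a [|b w]] Hv; simpl in Hv; try lia. reflexivity.
  - rewrite <- (simplex_int_swap01 k s (fun v => h (rot1 v)))
      by (auto; apply convex_on_simplex_rot1; auto).
    change (Defs.RInt (fun t =>
              simplex_int (S k) (fun v => h (rot1 (swap01 (t :: v)))) (s - t)) 0 s =
            Defs.RInt (fun t => simplex_int (S k) (fun v => h (t :: v)) (s - t)) 0 s).
    apply Defs_RInt_ext. intros t Ht. rewrite Rmin_left, Rmax_right in Ht by lra.
    rewrite <- (IHk (s - t) (fun v => h (t :: v)))
      by (try lra; apply convex_on_simplex_cons; auto; lra).
    apply simplex_int_ext. intros [|u w] Hv; simpl in Hv; try lia. reflexivity.
Qed.

Lemma simplex_int_rotn n : forall k s h, 0 <= s -> convex_on_simplex k s h ->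
  simplex_int k (fun v => h (rotn n v)) s = simplex_int k h s.
Proof.
  induction n; intros k s h Hs Hc; [reflexivity|]. simpl.
  rewrite (simplex_int_rot1 k s (fun v => h (rotn n v)))
    by (auto; apply convex_on_simplex_rotn; auto).
  apply IHn; auto.
Qed.

Lemma rotn_app u : forall w, rotn (length u) (u ++ w) = w ++ u.
Proof.
  induction u; intros w; simpl; [rewrite app_nil_r; auto|].
  rewrite <- app_assoc, IHu, <- app_assoc. reflexivity.
Qed.

(** * Faces and perspective functions *)

Fixpoint bary (ps : list vec) (cs : list R) : vec :=
  match ps, cs with
  | p :: ps', c :: cs' => fun j => c * p j + bary ps' cs' j
  | _, _ => fun _ => 0
  end.

Lemma face_point_bary y0 ys : forall ts j, length ys = length ts ->
  face_point y0 ys ts j = bary (y0 :: ys) ((1 - lsum ts) :: ts) j.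
Proof.
  induction ys as [|y ys IH]; intros [|t ts] j H; simpl in H; try lia; simpl.
  - unfold lsum; simpl. ring.
  - unfold vadd, vscale, vsub. rewrite IH by lia. simpl. unfold lsum; simpl. ring.
Qed.

Lemma bary_app ps1 : forall ps2 cs1 cs2 j, length ps1 = length cs1 ->
  bary (ps1 ++ ps2) (cs1 ++ cs2) j = bary ps1 cs1 j + bary ps2 cs2 j.
Proof.
  induction ps1; intros ps2 [|c cs1] cs2 j H; simpl in *; try lia; [ring|].
  rewrite IHps1 by lia. ring.
Qed.

Lemma bary_lscale ps : forall cs c j, bary ps (lscale c cs) j = c * bary ps cs j.
Proof.
  induction ps; intros [|c0 cs] c j; unfold lscale in *; simpl; try ring.
  rewrite IHps. ring.
Qed.

Lemma bary_convex_comb ps : forall cs1 cs2 l j, length cs1 = length cs2 ->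
  bary ps (convex_comb l cs1 cs2) j = l * bary ps cs1 j + (1 - l) * bary ps cs2 j.
Proof.
  induction ps; intros [|c1 cs1] [|c2 cs2] l j H; simpl in *; try lia; try ring.
  rewrite IHps by lia. ring.
Qed.

Lemma bary_zero ps : forall cs j, (forall z, In z cs -> z = 0) -> bary ps cs j = 0.
Proof.
  induction ps; intros [|c cs] j H; simpl; auto.
  rewrite IHps, (H c (or_introl eq_refl)) by (intros; apply H; right; auto). ring.
Qed.

Lemma in_std_simplex_0 k u : in_std_simplex k 0 u -> forall z, In z u -> z = 0.
Proof. intros [_ [P S]] z Hz. pose proof (in_le_lsum u z P Hz). pose proof (P z Hz). lra. Qed.

Lemma lscale_zero c u : (forall z, In z u -> z = 0) -> lscale c u = u.
Proof.
  induction u; intros H; unfold lscale in *; simpl; auto.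
  rewrite (H a (or_introl eq_refl)), IHu by (intros; apply H; right; auto). f_equal. ring.
Qed.

(* At [c = 0] both sides vanish, whatever [/ 0] is. *)
Lemma face_point_persp y0 ys c u j : 0 <= c -> in_std_simplex (length ys) c u ->
  c * face_point y0 ys (lscale (/ c) u) j = bary (y0 :: ys) ((c - lsum u) :: u) j.
Proof.
  intros Hc Hu. destruct (Req_dec c 0) as [->|Hc0].
  - pose proof (in_std_simplex_0 _ _ Hu) as Z.
    rewrite bary_zero, Rmult_0_l; auto.
    intros z [<-|Hz]; [|auto]. destruct Hu as [_ [P S]]. pose proof (lsum_nonneg u P). lra.
  - rewrite face_point_bary
      by (rewrite length_lscale; symmetry; apply (in_std_simplex_length _ _ _ Hu)).
    rewrite <- bary_lscale. f_equal.
    change (lscale c ((1 - lsum (lscale (/ c) u)) :: lscale (/ c) u))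
      with (c * (1 - lsum (lscale (/ c) u)) :: lscale c (lscale (/ c) u)).
    rewrite lsum_lscale, lscale_lscale, Rinv_r, lscale_1 by auto. f_equal. field. auto.
Qed.

Fixpoint coeff_at (is : list nat) (cs : list R) (m : nat) : R :=
  match is, cs with
  | i :: is', c :: cs' => (if Nat.eq_dec m i then c else 0) + coeff_at is' cs' m
  | _, _ => 0
  end.

Lemma sum_f_R0_indicator (g : nat -> R) i N : (i <= N)%nat ->
  sum_f_R0 (fun m => if Nat.eq_dec m i then g m else 0) N = g i.
Proof.
  induction N; intros H; cbn [sum_f_R0].
  - replace i with 0%nat by lia. destruct (Nat.eq_dec 0 0); [auto|lia].
  - destruct (Nat.eq_dec (S N) i) as [<-|Hne]; [|rewrite IHN by lia; ring].
    rewrite (sum_eq _ (fun _ => 0)), sum_cte; [ring|].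
    intros m Hm. destruct (Nat.eq_dec m (S N)); [lia|auto].
Qed.

Lemma sum_coeff_at N is : forall cs, length is = length cs -> (forall i, In i is -> (i <= N)%nat) ->
  sum_f_R0 (coeff_at is cs) N = lsum cs.
Proof.
  induction is as [|i is IH]; intros [|c cs] Hl Hb; simpl in Hl; try lia; cbn [coeff_at].
  - rewrite sum_cte. unfold lsum; simpl; ring.
  - assert (Hi : (i <= N)%nat) by (apply Hb; left; auto).
    rewrite plus_sum, (sum_f_R0_indicator (fun _ => c)), IH, lsum_cons; auto.
    intros; apply Hb; right; auto.
Qed.

Lemma bary_coeff_at (x : nat -> vec) N is : forall cs j, length is = length cs ->
  (forall i, In i is -> (i <= N)%nat) ->
  bary (map x is) cs j = sum_f_R0 (fun m => coeff_at is cs m * x m j) N.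
Proof.
  induction is as [|i is IH]; intros [|c cs] j Hl Hb; simpl in Hl; try lia; cbn [coeff_at map bary].
  - rewrite (sum_eq _ (fun _ => 0)), sum_cte by (intros; ring). ring.
  - rewrite (sum_eq _ (fun m =>
      (if Nat.eq_dec m i then c * x m j else 0) + coeff_at is cs m * x m j))
      by (intros m _; destruct (Nat.eq_dec m i); ring).
    assert (Hi : (i <= N)%nat) by (apply Hb; left; auto).
    rewrite plus_sum, (sum_f_R0_indicator (fun m => c * x m j)), IH; auto.
    intros; apply Hb; right; auto.
Qed.

Lemma coeff_at_nonneg is : forall cs m, (forall z, In z cs -> 0 <= z) -> 0 <= coeff_at is cs m.
Proof.
  induction is as [|i is IH]; intros [|c cs] m Hz; simpl; try lra.
  pose proof (Hz c (or_introl eq_refl)). pose proof (IH cs m (fun z H => Hz z (or_intror H))).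
  destruct (Nat.eq_dec m i); lra.
Qed.

Lemma face_point_in_simplex n (x : nat -> vec) i0 idx ts :
  (forall i, In i (i0 :: idx) -> (i <= n)%nat) -> in_std_simplex (length idx) 1 ts ->
  in_simplex n x (face_point (x i0) (map x idx) ts).
Proof.
  intros Hb [Hl [Hp Hs]].
  assert (Hlen : length (i0 :: idx) = length ((1 - lsum ts) :: ts)) by (simpl; lia).
  exists (coeff_at (i0 :: idx) ((1 - lsum ts) :: ts)). repeat split.
  - intros i _. apply coeff_at_nonneg. intros z [<-|Hz]; [lra|auto].
  - rewrite sum_coeff_at, lsum_cons by auto. ring.
  - intros j. rewrite face_point_bary by (rewrite length_map; lia).
    apply (bary_coeff_at x n (i0 :: idx)); auto.
Qed.

Lemma face_point_convex_comb y0 ys u v l j : length ys = length u -> length u = length v ->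
  face_point y0 ys (convex_comb l u v) j =
  l * face_point y0 ys u j + (1 - l) * face_point y0 ys v j.
Proof.
  intros H1 H2. rewrite !face_point_bary by (rewrite ?convex_comb_length; lia).
  rewrite lsum_convex_comb by lia.
  replace ((1 - (l * lsum u + (1 - l) * lsum v)) :: convex_comb l u v) with
    (convex_comb l ((1 - lsum u) :: u) ((1 - lsum v) :: v)) by (simpl; f_equal; ring).
  apply bary_convex_comb. simpl; lia.
Qed.

Lemma convex_on_simplex_face n (x : nat -> vec) f i0 idx : convex_on (in_simplex n x) f ->
  (forall i, In i (i0 :: idx) -> (i <= n)%nat) ->
  convex_on_simplex (length idx) 1 (fun ts => f (face_point (x i0) (map x idx) ts)).
Proof.
  intros Hf Hb u v l Hu Hv Hl.
  replace (face_point (x i0) (map x idx) (convex_comb l u v)) with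
    (vadd (vscale l (face_point (x i0) (map x idx) u))
          (vscale (1 - l) (face_point (x i0) (map x idx) v))).
  - apply Hf; auto; apply face_point_in_simplex; auto.
  - apply functional_extensionality; intros j. unfold vadd, vscale.
    rewrite face_point_convex_comb; auto; rewrite ?length_map;
      rewrite (in_std_simplex_length _ _ _ Hu), ?(in_std_simplex_length _ _ _ Hv); auto.
Qed.

Definition persp (G : list R -> R) (c : R) (u : list R) : R := c * G (lscale (/ c) u).

Lemma inv_convex_comb_scalar c1 c2 l x y : 0 <= c1 -> 0 <= c2 -> 0 <= l <= 1 ->
  0 < l * c1 + (1 - l) * c2 -> (c1 = 0 -> x = 0) -> (c2 = 0 -> y = 0) ->
  / (l * c1 + (1 - l) * c2) * (l * x + (1 - l) * y) =
  l * c1 / (l * c1 + (1 - l) * c2) * (/ c1 * x) +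
  (1 - l * c1 / (l * c1 + (1 - l) * c2)) * (/ c2 * y).
Proof.
  intros H1 H2 Hl Hc Z1 Z2.
  destruct (Req_dec c1 0) as [E1|E1], (Req_dec c2 0) as [E2|E2].
  - subst. lra.
  - subst c1. rewrite (Z1 eq_refl), !Rmult_0_r, !Rplus_0_l in *. unfold Rdiv.
    rewrite Rmult_0_l, Rminus_0_r. field. split; nra.
  - subst c2. rewrite (Z2 eq_refl), !Rmult_0_r, !Rplus_0_r in *. field. split; nra.
  - field. repeat split; lra.
Qed.

Lemma lscale_inv_convex_comb a c1 c2 u1 u2 l : 0 <= c1 -> 0 <= c2 -> 0 <= l <= 1 ->
  0 < l * c1 + (1 - l) * c2 -> in_std_simplex a c1 u1 -> in_std_simplex a c2 u2 ->
  lscale (/ (l * c1 + (1 - l) * c2)) (convex_comb l u1 u2) =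
  convex_comb (l * c1 / (l * c1 + (1 - l) * c2)) (lscale (/ c1) u1) (lscale (/ c2) u2).
Proof.
  intros H1 H2 Hl Hc U1 U2.
  assert (Z1 : c1 = 0 -> forall z, In z u1 -> z = 0) by (intros ->; apply (in_std_simplex_0 a), U1).
  assert (Z2 : c2 = 0 -> forall z, In z u2 -> z = 0) by (intros ->; apply (in_std_simplex_0 a), U2).
  assert (L : length u1 = length u2)
    by (rewrite (in_std_simplex_length _ _ _ U1), (in_std_simplex_length _ _ _ U2); auto).
  clear U1 U2. revert u2 L Z1 Z2.
  induction u1 as [|x u1 IH]; intros [|y u2] L Z1 Z2; simpl in L; try lia; [reflexivity|].
  unfold lscale in *; simpl. f_equal.
  - apply inv_convex_comb_scalar; auto.
    + intros E; apply (Z1 E); left; auto.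
    + intros E; apply (Z2 E); left; auto.
  - apply IH; auto.
    + intros E z Hz; apply Z1; auto; right; auto.
    + intros E z Hz; apply Z2; auto; right; auto.
Qed.

Lemma in_std_simplex_lscale_inv k c u : 0 <= c -> in_std_simplex k c u ->
  in_std_simplex k 1 (lscale (/ c) u).
Proof.
  intros Hc Hu. destruct (Req_dec c 0) as [->|Hne].
  - rewrite lscale_zero by (apply (in_std_simplex_0 k), Hu).
    destruct Hu as [? [? ?]]. repeat split; auto; lra.
  - rewrite <- (Rinv_l c) by auto. apply in_std_simplex_lscale; auto.
    left; apply Rinv_0_lt_compat; lra.
Qed.

Lemma persp_convex a G c1 c2 u1 u2 l : convex_on_simplex a 1 G -> 0 <= c1 -> 0 <= c2 ->
  in_std_simplex a c1 u1 -> in_std_simplex a c2 u2 -> 0 <= l <= 1 ->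
  persp G (l * c1 + (1 - l) * c2) (convex_comb l u1 u2) <=
  l * persp G c1 u1 + (1 - l) * persp G c2 u2.
Proof.
  intros Hc H1 H2 U1 U2 Hl. unfold persp.
  set (c := l * c1 + (1 - l) * c2).
  destruct (Req_dec c 0) as [E|E].
  { assert (l * c1 = 0) by (unfold c in E; nra). assert ((1 - l) * c2 = 0) by (unfold c in E; nra).
    rewrite E, !Rmult_0_l, <- !Rmult_assoc, H, H0. lra. }
  assert (Hcp : 0 < c) by (unfold c in *; nra).
  set (mu := l * c1 / c).
  assert (Hmu : 0 <= mu <= 1).
  { unfold mu. split; [apply Rdiv_le_0_compat; nra|].
    apply Rmult_le_reg_r with c; auto. unfold Rdiv; rewrite Rmult_assoc, Rinv_l by lra.
    unfold c; nra. }
  unfold c. rewrite (lscale_inv_convex_comb a) by (auto; fold c; lra). fold c. fold mu.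
  apply Rle_trans with (c * (mu * G (lscale (/ c1) u1) + (1 - mu) * G (lscale (/ c2) u2))).
  - apply Rmult_le_compat_l; [lra|]. apply Hc; auto; apply in_std_simplex_lscale_inv; auto.
  - assert (c * mu = l * c1) by (unfold mu; field; lra).
    assert (c * (1 - mu) = (1 - l) * c2)
      by (rewrite Rmult_minus_distr_l, Rmult_1_r, H; unfold c; ring).
    right. rewrite Rmult_plus_distr_l, <- !Rmult_assoc, H, H0. ring.
Qed.

Definition persp_head (G : list R -> R) (a : nat) (ts : list R) : R :=
  persp G (1 - lsum (skipn a ts)) (firstn a ts).

Definition persp_tail (G : list R -> R) (a : nat) (ts : list R) : R :=
  persp G (lsum (skipn a ts)) (tl (skipn a ts)).

Lemma firstn_convex_comb l a : forall u v,
  firstn a (convex_comb l u v) = convex_comb l (firstn a u) (firstn a v).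
Proof. induction a; intros [|x u] [|y v]; simpl; auto. f_equal; auto. Qed.

Lemma skipn_convex_comb l a : forall u v,
  skipn a (convex_comb l u v) = convex_comb l (skipn a u) (skipn a v).
Proof. induction a; intros [|x u] [|y v]; simpl; auto. destruct (skipn a u); auto. Qed.

Lemma in_std_simplex_nonneg k s v : in_std_simplex k s v -> 0 <= s.
Proof. intros [_ [P S]]. pose proof (lsum_nonneg v P). lra. Qed.

Lemma in_std_simplex_split a b ts : in_std_simplex (a + b) 1 ts ->
  in_std_simplex a (1 - lsum (skipn a ts)) (firstn a ts) /\ in_std_simplex b 1 (skipn a ts).
Proof.
  intros [L [P S]]. rewrite <- (firstn_skipn a ts), lsum_app in S.
  rewrite <- (firstn_skipn a ts) in P.
  assert (Pf : forall z, In z (firstn a ts) -> 0 <= z) by (intros z Hz; apply P, in_app_iff; auto).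
  assert (Ps : forall z, In z (skipn a ts) -> 0 <= z) by (intros z Hz; apply P, in_app_iff; auto).
  pose proof (lsum_nonneg _ Pf). repeat split; auto; try lra.
  - rewrite length_firstn. lia.
  - rewrite length_skipn. lia.
Qed.

Lemma convex_on_simplex_persp_head a b G : convex_on_simplex a 1 G ->
  convex_on_simplex (a + b) 1 (persp_head G a).
Proof.
  intros Hc ts1 ts2 l H1 H2 Hl. unfold persp_head.
  destruct (in_std_simplex_split a b ts1 H1) as [A1 B1],
    (in_std_simplex_split a b ts2 H2) as [A2 B2].
  rewrite firstn_convex_comb, skipn_convex_comb, lsum_convex_comb
    by (rewrite (in_std_simplex_length _ _ _ B1), (in_std_simplex_length _ _ _ B2); auto).
  replace (1 - (l * lsum (skipn a ts1) + (1 - l) * lsum (skipn a ts2))) with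
    (l * (1 - lsum (skipn a ts1)) + (1 - l) * (1 - lsum (skipn a ts2))) by ring.
  apply (persp_convex a G); auto; eapply in_std_simplex_nonneg; eauto.
Qed.

Lemma face_point_app y0 ys z0 zs u w0 w' j :
  in_std_simplex (length ys) (1 - (w0 + lsum w')) u ->
  in_std_simplex (length zs) (w0 + lsum w') w' ->
  face_point y0 (ys ++ z0 :: zs) (u ++ w0 :: w') j =
  (1 - (w0 + lsum w')) * face_point y0 ys (lscale (/ (1 - (w0 + lsum w'))) u) j +
  (w0 + lsum w') * face_point z0 zs (lscale (/ (w0 + lsum w')) w') j.
Proof.
  intros HU HW. pose proof (in_std_simplex_length _ _ _ HU) as LU.
  pose proof (in_std_simplex_length _ _ _ HW) as LW.
  pose proof (in_std_simplex_nonneg _ _ _ HU). pose proof (in_std_simplex_nonneg _ _ _ HW).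
  rewrite face_point_bary by (rewrite !length_app; simpl; lia).
  rewrite !face_point_persp by (rewrite ?LU, ?LW; auto).
  change (y0 :: ys ++ z0 :: zs) with ((y0 :: ys) ++ z0 :: zs).
  change ((1 - lsum (u ++ w0 :: w')) :: u ++ w0 :: w')
    with (((1 - lsum (u ++ w0 :: w')) :: u) ++ (w0 :: w')).
  rewrite bary_app by (simpl; auto).
  rewrite lsum_app, lsum_cons. f_equal; f_equal; f_equal; ring.
Qed.

Lemma face_point_split_le n x f k0 K' l0 L' ts : convex_on (in_simplex n x) f ->
  (forall i, In i (k0 :: K' ++ l0 :: L') -> (i <= n)%nat) ->
  in_std_simplex (length K' + S (length L')) 1 ts ->
  f (face_point (x k0) (map x (K' ++ l0 :: L')) ts) <=
  persp_head (fun u => f (face_point (x k0) (map x K') u)) (length K') ts +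
  persp_tail (fun w => f (face_point (x l0) (map x L') w)) (length K') ts.
Proof.
  intros Hf Hb Hts. unfold persp_head, persp_tail, persp.
  destruct (in_std_simplex_split _ _ _ Hts) as [HU HW].
  rewrite <- (firstn_skipn (length K') ts) at 1.
  set (u := firstn (length K') ts) in *. set (w := skipn (length K') ts) in *.
  clearbody u w. destruct w as [|w0 w']; [destruct HW as [HW _]; discriminate|].
  apply in_std_simplex_cons in HW as [Hw0 HW']. cbn [tl]. rewrite lsum_cons in *.
  assert (HW : in_std_simplex (length L') (w0 + lsum w') w')
    by (destruct HW' as [? [? ?]]; repeat split; auto; lra).
  pose proof (in_std_simplex_nonneg _ _ _ HU). pose proof (in_std_simplex_nonneg _ _ _ HW).
  replace (face_point (x k0) (map x (K' ++ l0 :: L')) (u ++ w0 :: w')) with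
    (vadd (vscale (1 - (w0 + lsum w'))
             (face_point (x k0) (map x K') (lscale (/ (1 - (w0 + lsum w'))) u)))
          (vscale (1 - (1 - (w0 + lsum w')))
             (face_point (x l0) (map x L') (lscale (/ (w0 + lsum w')) w')))).
  - eapply Rle_trans; [apply Hf; try lra|right; ring];
      apply face_point_in_simplex; try apply in_std_simplex_lscale_inv; auto.
    + intros i [<-|Hi]; apply Hb; [left|right; apply in_app_iff]; auto.
    + intros i Hi; apply Hb; right; apply in_app_iff; auto.
  - apply functional_extensionality; intros j. unfold vadd, vscale.
    replace (1 - (1 - (w0 + lsum w'))) with (w0 + lsum w') by ring.
    rewrite map_app. symmetry. apply face_point_app; rewrite length_map; auto.
Qed.

(** * Integrating the perspective functions *)

Lemma convex_on_simplex_reflect_last k s h : convex_on_simplex (S k) s h ->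
  convex_on_simplex (S k) s (fun v => h (reflect_last s v)).
Proof.
  intros Hc. apply (convex_on_simplex_comp (S k) s h (S k) s (reflect_last s)); auto.
  - intros v Hv. destruct (exists_last (l := v)) as [v' [t ->]].
    { intros ->. destruct Hv as [Hv _]. discriminate. }
    destruct Hv as [L [P S]]. rewrite reflect_last_app, lsum_app in *.
    assert (Pv' : forall z, In z v' -> 0 <= z) by (intros; apply P, in_app_iff; auto).
    assert (0 <= t) by (apply P, in_app_iff; right; left; auto).
    unfold lsum at 2 in S; simpl in S.
    repeat split.
    + rewrite length_app in *. auto.
    + intros z Hz. apply in_app_iff in Hz as [Hz|[<-|[]]]; auto. lra.
    + rewrite lsum_app. unfold lsum at 2; simpl. lra.
  - intros u v l Hu Hv _.
    destruct (exists_last (l := u)) as [u' [a ->]]; [intros ->; destruct Hu; discriminate|].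
    destruct (exists_last (l := v)) as [v' [b ->]]; [intros ->; destruct Hv; discriminate|].
    assert (Luv : length u' = length v').
    { apply in_std_simplex_length in Hu, Hv. rewrite length_app in Hu, Hv. simpl in *. lia. }
    rewrite !reflect_last_app, !convex_comb_app by auto.
    change (convex_comb l [a] [b]) with [l * a + (1 - l) * b].
    rewrite reflect_last_app, lsum_convex_comb by auto. simpl. do 2 f_equal. ring.
Qed.

Lemma simplex_int_persp a G c : simplex_int a (persp G c) c = c ^ S a * simplex_int a G 1.
Proof.
  destruct (Req_dec c 0) as [->|Hc].
  - unfold persp. rewrite simplex_int_scal. simpl. ring.
  - rewrite simplex_int_dilate_1, (simplex_int_ext a _ (fun w => c * G w)), simplex_int_scal.
    + simpl. ring.
    + intros w _. unfold persp. rewrite lscale_lscale, Rinv_l, lscale_1 by auto. reflexivity.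
Qed.

(* After moving the last [m] coordinates to the front, the inner integral over the first [a]
   coordinates is [(1 - lsum w) ^ S a * simplex_int a G 1] by dilation. *)
Lemma simplex_int_persp_head a m G : convex_on_simplex a 1 G ->
  simplex_int (a + m) (persp_head G a) 1 =
  INR (fact (S a)) / INR (fact (m + S a)) * simplex_int a G 1.
Proof.
  intros Hc.
  rewrite <- (simplex_int_rotn m) by (try lra; apply convex_on_simplex_persp_head; auto).
  replace (a + m)%nat with (m + a)%nat by lia. rewrite simplex_int_app.
  rewrite (simplex_int_ext m _ (fun w => simplex_int a G 1 * (1 - lsum w) ^ S a)).
  - rewrite simplex_int_scal, simplex_int_pow, pow1. field. apply Rgt_not_eq, INR_fact_lt_0.
  - intros w Hw. rewrite Rmult_comm, <- simplex_int_persp. apply simplex_int_ext. intros u Hu.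
    unfold persp_head. rewrite <- Hw, rotn_app, <- Hu, firstn_length_app, skipn_length_app.
    reflexivity.
Qed.

(* Barycentrically, this exchanges the roles of the first vertex and vertex [a + 1]. *)
Lemma persp_tail_symmetry a G u w0 w' : length u = a ->
  persp_tail G a (u ++ w0 :: w') =
  persp_head G (length w') (reflect_last 1 (rotn (S a) (u ++ w0 :: w'))).
Proof.
  intros <-. unfold persp_tail, persp_head. rewrite skipn_length_app. cbn [tl].
  replace (S (length u)) with (length (u ++ [w0])) by (rewrite length_app; simpl; lia).
  replace (u ++ w0 :: w') with ((u ++ [w0]) ++ w') by (rewrite <- app_assoc; reflexivity).
  rewrite rotn_app, app_assoc, reflect_last_app, <- app_assoc, firstn_length_app,
    skipn_length_app. f_equal.
  rewrite !lsum_app, !lsum_cons. unfold lsum; simpl. ring.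
Qed.

Lemma persp_tail_symmetry_simplex a b G v : length v = (a + S b)%nat ->
  persp_tail G a v = persp_head G b (reflect_last 1 (rotn (S a) v)).
Proof.
  intros Hv. rewrite <- (firstn_skipn a v).
  assert (Hs : length (skipn a v) = S b) by (rewrite length_skipn; lia).
  destruct (skipn a v) as [|w0 w'] eqn:E; [discriminate|]. injection Hs as Hs.
  rewrite <- Hs. apply persp_tail_symmetry. rewrite length_firstn. lia.
Qed.

Lemma convex_on_simplex_persp_head_reflect a b G : convex_on_simplex b 1 G ->
  convex_on_simplex (a + S b) 1 (fun v => persp_head G b (reflect_last 1 v)).
Proof.
  intros Hc. replace (a + S b)%nat with (S (b + a)) by lia.
  apply convex_on_simplex_reflect_last. replace (S (b + a)) with (b + S a)%nat by lia.
  apply convex_on_simplex_persp_head, Hc.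
Qed.

Lemma convex_on_simplex_persp_tail a b G : convex_on_simplex b 1 G ->
  convex_on_simplex (a + S b) 1 (persp_tail G a).
Proof.
  intros Hc. eapply convex_on_simplex_ext.
  - intros v Hv. symmetry. apply persp_tail_symmetry_simplex, (in_std_simplex_length _ _ _ Hv).
  - apply (convex_on_simplex_rotn (S a) (a + S b) 1 (fun v => persp_head G b (reflect_last 1 v))).
    apply convex_on_simplex_persp_head_reflect, Hc.
Qed.

Lemma simplex_int_persp_tail a b G : convex_on_simplex b 1 G ->
  simplex_int (a + S b) (persp_tail G a) 1 =
  INR (fact (S b)) / INR (fact (S a + S b)) * simplex_int b G 1.
Proof.
  intros Hc.
  rewrite (simplex_int_ext _ _ (fun v => persp_head G b (reflect_last 1 (rotn (S a) v))))
    by (intros; apply persp_tail_symmetry_simplex; auto).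
  rewrite (simplex_int_rotn (S a) (a + S b) 1 (fun v => persp_head G b (reflect_last 1 v)))
    by (try lra; apply convex_on_simplex_persp_head_reflect, Hc).
  replace (a + S b)%nat with (S (b + a)) by lia. rewrite simplex_int_reflect_last.
  replace (S (b + a)) with (b + S a)%nat by lia. apply simplex_int_persp_head, Hc.
Qed.

Lemma simplex_int_face_split_le n x f k0 K' l0 L' : convex_on (in_simplex n x) f ->
  (forall i, In i (k0 :: K' ++ l0 :: L') -> (i <= n)%nat) ->
  simplex_int (length K' + S (length L'))
    (fun ts => f (face_point (x k0) (map x (K' ++ l0 :: L')) ts)) 1
  <= INR (fact (S (length K'))) / INR (fact (S (length L') + S (length K'))) *
       simplex_int (length K') (fun u => f (face_point (x k0) (map x K') u)) 1
   + INR (fact (S (length L'))) / INR (fact (S (length K') + S (length L'))) *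
       simplex_int (length L') (fun w => f (face_point (x l0) (map x L') w)) 1.
Proof.
  intros Hf Hb.
  set (FY := fun u => f (face_point (x k0) (map x K') u)).
  set (FZ := fun w => f (face_point (x l0) (map x L') w)).
  assert (CY : convex_on_simplex (length K') 1 FY).
  { apply (convex_on_simplex_face n x f k0 K' Hf).
    intros i [<-|Hi]; apply Hb; [left|right; apply in_app_iff]; auto. }
  assert (CZ : convex_on_simplex (length L') 1 FZ).
  { apply (convex_on_simplex_face n x f l0 L' Hf).
    intros i Hi. apply Hb. right. apply in_app_iff. auto. }
  assert (CJ : convex_on_simplex (length K' + S (length L')) 1
                 (fun ts => f (face_point (x k0) (map x (K' ++ l0 :: L')) ts))).
  { replace (length K' + S (length L'))%nat with (length (K' ++ l0 :: L'))
      by (rewrite length_app; auto).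
    apply (convex_on_simplex_face n x f k0); auto. }
  rewrite <- simplex_int_persp_head, <- simplex_int_persp_tail by auto.
  eapply Rle_trans;
    [apply (simplex_int_le_lin _ _ (persp_head FY (length K')) (persp_tail FZ (length K')) _ 1 1)
    |right; ring].
  - lra.
  - apply convex_iter_integrable; [lra|]. apply convex_on_simplex_persp_head; auto.
  - apply convex_iter_integrable; [lra|]. apply convex_on_simplex_persp_tail; auto.
  - apply convex_iter_integrable; auto; lra.
  - intros v Hv. rewrite !Rmult_1_l. apply (face_point_split_le n); auto.
Qed.

Theorem lemma2 (n : nat) (x : nat -> vec) (f : vec -> R) (K L : list nat) :
  (1 <= n)%nat ->
  (forall i j, (n <= j)%nat -> x i j = 0) ->
  affinely_independent n x ->
  convex_on (in_simplex n x) f ->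
  NoDup K -> NoDup L -> K <> [] -> L <> [] ->
  (forall i, In i K -> (i <= n)%nat) ->
  (forall i, In i L -> (i <= n)%nat) ->
  (forall i, In i K -> ~ In i L) ->
  Avg f (map x (K ++ L)) <=
    INR (length K) / INR (length K + length L) * Avg f (map x K)
  + INR (length L) / INR (length K + length L) * Avg f (map x L).
Proof.
  (* [Avg] is defined through the affine parametrization of each face. *)
  intros _ _ _ Hf _ _ HK HL HKb HLb _.
  destruct K as [|k0 K']; [congruence|]. destruct L as [|l0 L']; [congruence|].
  assert (Hb : forall i, In i (k0 :: K' ++ l0 :: L') -> (i <= n)%nat).
  { intros i [<-|Hi]; [apply HKb; left; auto|].
    apply in_app_iff in Hi as [Hi|Hi]; [apply HKb; right|apply HLb]; auto. }
  pose proof (simplex_int_face_split_le n x f k0 K' l0 L' Hf Hb) as Main.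
  unfold Avg. change ((k0 :: K') ++ l0 :: L') with (k0 :: K' ++ l0 :: L'). cbn [map length].
  rewrite !length_map, length_app. cbn [length].
  set (a := length K') in *. set (b := length L') in *.
  replace (S b + S a)%nat with (S (a + S b)) in Main by lia.
  replace (S a + S b)%nat with (S (a + S b)) in * by lia.
  rewrite !fact_simpl, !mult_INR in Main.
  pose proof (INR_fact_lt_0 (a + S b)). pose proof (INR_fact_lt_0 a). pose proof (INR_fact_lt_0 b).
  assert (0 < INR (S (a + S b))) by (apply lt_0_INR; lia).
  eapply Rle_trans; [apply Rmult_le_compat_l; [lra|exact Main]|]. right. field. lra.
Qed.
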